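(* Let $(H,\alpha)$ be a monoidal Hom-Hopf algebra with bijective antipode $S$, and let $(\Omega^1(H),\beta)$ be its universal Hom-FODC (described in the context). (1) Let $\mathcal{R}\subseteq\ker\varepsilon$ be a subspace with $\alpha(\mathcal{R})=\mathcal{R}$ which is a right Hom-ideal of $(H,\alpha)$. Then $\mathcal{N}:=H\cdot\omega_{\Omega^1(H)}(\mathcal{R})$ is an $(H,\alpha)$-Hom-subbimodule of $(\Omega^1(H),\beta)$, and $(\Gamma,\gamma):=(\Omega^1(H)/\mathcal{N},\bar\beta)$ (with $\bar\beta$ induced by $\beta$ and differential $\bar d h=dh+\mathcal{N}$) is a left-covariant Hom-FODC over $(H,\alpha)$ with $\mathcal{R}_\Gamma=\mathcal{R}$. (2) For any left-covariant $(H,\alpha)$-Hom-FODC $(\Gamma,\gamma)$, $\mathcal{R}_\Gamma$ is a right Hom-ideal of $(H,\alpha)$ (contained in $\ker\varepsilon$) and $\Gamma$ is isomorphic to $\Omega^1(H)/H\cdot\omega_{\Omega^1(H)}(\mathcal{R}_\Gamma)$.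
   Context: All vector spaces are over a field $k$. $\widetilde{\mathcal{H}}(\mathcal{M}_k)$: objects $(M,\mu)$, $\mu$ a linear automorphism of $M$; morphisms are linear maps commuting with the automorphisms. A monoidal Hom-algebra $(A,\alpha)$: multiplication with $\alpha(ab)=\alpha(a)\alpha(b)$, $\alpha(1)=1$, $\alpha(a)(bc)=(ab)\alpha(c)$, $1a=a1=\alpha(a)$. A monoidal Hom-Hopf algebra $(H,\alpha)$ is a monoidal Hom-algebra with comultiplication $\Delta(h)=h_1\otimes h_2$ and counit $\varepsilon$ (algebra maps commuting with $\alpha$) satisfying $\alpha^{-1}(h_1)\otimes h_{21}\otimes h_{22}=h_{11}\otimes h_{12}\otimes\alpha^{-1}(h_2)$, $\varepsilon(h_1)h_2=h_1\varepsilon(h_2)=\alpha^{-1}(h)$, and with an antipode $S$ commuting with $\alpha$ such that $S(h_1)h_2=h_1S(h_2)=\varepsilon(h)1$. Hom-modules/bimodules: $\alpha(a)\cdot(b\cdot m)=(ab)\cdot\mu(m)$, $1\cdot m=\mu(m)$, $(m\cdot a)\cdot\alpha(b)=\mu(m)\cdot(ab)$, $m\cdot1=\mu(m)$, $\alpha(a)\cdot(m\cdot b)=(a\cdot m)\cdot\alpha(b)$. Left Hom-comodule $(M,\mu)$: $\rho(m)=m_{(-1)}\otimes m_{(0)}$ with $\alpha^{-1}(m_{(-1)})\otimes m_{(0)(-1)}\otimes m_{(0)(0)}=m_{(-1)1}\otimes m_{(-1)2}\otimes\mu^{-1}(m_{(0)})$, $\varepsilon(m_{(-1)})m_{(0)}=\mu^{-1}(m)$,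 $\rho\circ\mu=(\alpha\otimes\mu)\circ\rho$. A Hom-FODC over $(H,\alpha)$ is an $(H,\alpha)$-Hom-bimodule $(\Gamma,\gamma)$ with linear $d:H\to\Gamma$, $d(hg)=h\cdot dg+dh\cdot g$, $d\circ\alpha=\gamma\circ d$, and $\Gamma$ spanned by $(h\cdot dg)\cdot f$. It is left-covariant if there is a left Hom-coaction $\phi:\Gamma\to H\otimes\Gamma$ of $(H,\alpha)$ with $\phi(\alpha(h)\cdot(\omega\cdot g))=\Delta(\alpha(h))(\phi(\omega)\Delta(g))$ and $\phi(dh)=h_1\otimes dh_2$ (products in $H\otimes\Gamma$ componentwise: $(h\otimes x)(h'\otimes\omega)=hh'\otimes x\cdot\omega$, $(h'\otimes\omega)(h\otimes x)=h'h\otimes\omega\cdot x$). For a left-covariant Hom-FODC define $\omega_\Gamma(h):=S(h_1)\cdot dh_2$ and $\mathcal{R}_\Gamma:=\{h\in\ker\varepsilon:\ \omega_\Gamma(h)=0\}$. A right Hom-ideal of $(H,\alpha)$ is a subspace $\mathcal{R}$ with $\alpha(\mathcal{R})=\mathcal{R}$ and $\mathcal{R}H\subseteq\mathcal{R}$. Universal Hom-FODC: write $\bar h:=h-\varepsilon(h)1$. $\Omega^1(H):=H\otimes\ker\varepsilon$ with $\beta:=\alpha\otimes\alpha$; for $g,h\in H$ write $g\cdot\omega(h):=g\otimes\bar h$. Its Hom-bimodule structure is $g'\cdot(g\cdot\omega(h))=(\alpha^{-1}(g')g)\cdot\omega(\alpha(h))$ and $(g'\cdot\omega(h))\cdot g=(g'g_1)\cdot\omega(\bar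 h g_2)$, its differential is $dh=h_1\cdot\omega(h_2)$, and $\omega_{\Omega^1(H)}(h)=S(h_1)\cdot dh_2=1\otimes\overline{\alpha^{-1}(h)}$. *)

From HB Require Import structures.
From mathcomp Require Import all_boot all_algebra.
From mathcomp Require Import boolp.
Set Implicit Arguments. Unset Strict Implicit. Unset Printing Implicit Defensive.
Import GRing.Theory.
Local Open Scope ring_scope.
Local Open Scope quotient_scope.

Definition lin (k : fieldType) (U W : lmodType k) (f : U -> W) : Prop :=
  forall (a : k) (x y : U), f (a *: x + y) = a *: f x + f y.

Definition bilin (k : fieldType) (U V W : lmodType k) (f : U -> V -> W) : Prop :=
  (forall v, lin (fun u => f u v)) /\ (forall u, lin (f u)).

Section Tensor.
Variables (k : fieldType) (U V : lmodType k).

Definition tsum (W : lmodType k) (f : U -> V -> W) (s : seq (U * V)) : W :=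
  \sum_(p <- s) f p.1 p.2.

Definition tequiv (s t : seq (U * V)) : Prop :=
  forall (W : lmodType k) (f : U -> V -> W), bilin f -> tsum f s = tsum f t.

Definition tequivb (s t : seq (U * V)) : bool := `[< tequiv s t >].

Lemma tequivb_refl : reflexive tequivb.
Proof. by move=> s; apply/asboolP. Qed.
Lemma tequivb_sym : symmetric tequivb.
Proof.
by move=> s t; apply/asboolP/asboolP => h W f hf; rewrite h.
Qed.
Lemma tequivb_trans : transitive tequivb.
Proof.
by move=> t s u /asboolP h1 /asboolP h2; apply/asboolP => W f hf; rewrite h1 ?h2.
Qed.

Canonical tequiv_equiv := EquivRel tequivb tequivb_refl tequivb_sym tequivb_trans.

Definition tensor := {eq_quot tequivb}.
HB.instance Definition _ : EqQuotient _ tequivb tensor := EqQuotient.on tensor.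
HB.instance Definition _ := Choice.on tensor.

Definition tlift (W : lmodType k) (f : U -> V -> W) (x : tensor) : W := tsum f (repr x).

Lemma tsum_repr (W : lmodType k) (f : U -> V -> W) s : bilin f ->
  tsum f (repr (\pi_tensor s)) = tsum f s.
Proof.
move=> hf; have : repr (\pi_tensor s) = s %[mod tensor] by rewrite reprK.
by move/eqmodP/asboolP; apply.
Qed.

Lemma tensor_ext (x y : tensor) :
  (forall (W : lmodType k) (f : U -> V -> W), bilin f -> tlift f x = tlift f y) -> x = y.
Proof.
move=> h; rewrite -[x]reprK -[y]reprK; apply/eqmodP/asboolP => W f hf; exact: h.
Qed.

Section BilinFacts.
Variables (W : lmodType k) (f : U -> V -> W) (hf : bilin f).
Lemma bl0 v : f 0 v = 0.
Proof.
have := hf.1 v 1 0 0; rewrite !scale1r addr0 => h.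
by apply: (@addrI _ (f 0 v)); rewrite addr0 -h.
Qed.
Lemma blZ a u v : f (a *: u) v = a *: f u v.
Proof. by have := hf.1 v a u 0; rewrite addr0 bl0 addr0. Qed.
Lemma blD u u' v : f (u + u') v = f u v + f u' v.
Proof. by have := hf.1 v 1 u u'; rewrite !scale1r. Qed.
Lemma blN u v : f (- u) v = - f u v.
Proof. by rewrite -scaleN1r blZ scaleN1r. Qed.
End BilinFacts.

Definition tzero : tensor := \pi_tensor [::].
Definition tadd (x y : tensor) : tensor := \pi_tensor (repr x ++ repr y).
Definition topp (x : tensor) : tensor :=
  \pi_tensor (map (fun p => (- p.1, p.2)) (repr x)).
Definition tscale (a : k) (x : tensor) : tensor :=
  \pi_tensor (map (fun p => (a *: p.1, p.2)) (repr x)).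

Lemma tsum_cat (W : lmodType k) (f : U -> V -> W) s t : tsum f (s ++ t) = tsum f s + tsum f t.
Proof. by rewrite /tsum big_cat. Qed.
Lemma tsum_nil (W : lmodType k) (f : U -> V -> W) : tsum f [::] = 0.
Proof. by rewrite /tsum big_nil. Qed.
Lemma tsum_opp (W : lmodType k) (f : U -> V -> W) s : bilin f ->
  tsum f (map (fun p => (- p.1, p.2)) s) = - tsum f s.
Proof.
move=> hf; rewrite /tsum big_map -sumrN; apply: eq_bigr => p _ /=; exact: blN.
Qed.
Lemma tsum_scale (W : lmodType k) (f : U -> V -> W) a s : bilin f ->
  tsum f (map (fun p => (a *: p.1, p.2)) s) = a *: tsum f s.
Proof.
move=> hf; rewrite /tsum big_map scaler_sumr; apply: eq_bigr => p _ /=; exact: blZ.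
Qed.

Ltac tsimp := rewrite /tlift /tadd /topp /tscale /tzero;
  repeat (rewrite ?tsum_repr ?tsum_cat ?tsum_nil ?tsum_opp ?tsum_scale //).

Lemma taddA : associative tadd.
Proof. move=> x y z; apply: tensor_ext => W f hf; tsimp; by rewrite addrA. Qed.
Lemma taddC : commutative tadd.
Proof. move=> x y; apply: tensor_ext => W f hf; tsimp; by rewrite addrC. Qed.
Lemma tadd0 : left_id tzero tadd.
Proof. move=> x; apply: tensor_ext => W f hf; tsimp; by rewrite add0r. Qed.
Lemma taddN : left_inverse tzero topp tadd.
Proof. move=> x; apply: tensor_ext => W f hf; tsimp; by rewrite addNr. Qed.

HB.instance Definition _ := GRing.isZmodule.Build tensor taddA taddC tadd0 taddN.

Lemma tscaleA a b x : tscale a (tscale b x) = tscale (a * b) x.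
Proof. apply: tensor_ext => W f hf; tsimp; by rewrite scalerA. Qed.
Lemma tscale1 : left_id 1 tscale.
Proof. move=> x; apply: tensor_ext => W f hf; tsimp; by rewrite scale1r. Qed.
Lemma tscaleDr : right_distributive tscale +%R.
Proof. move=> a x y; apply: tensor_ext => W f hf; rewrite /GRing.add /=. tsimp; by rewrite scalerDr. Qed.
Lemma tscaleDl x : {morph tscale^~ x : a b / a + b}.
Proof. move=> a b; apply: tensor_ext => W f hf; rewrite /GRing.add /=. tsimp; by rewrite scalerDl. Qed.

HB.instance Definition _ := GRing.Zmodule_isLmodule.Build k tensor tscaleA tscale1 tscaleDr tscaleDl.

Definition tpure (u : U) (v : V) : tensor := \pi_tensor [:: (u, v)].

End Tensor.

Arguments tpure {k U V}.

Section TensorOps.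
Variable k : fieldType.

Definition tmap (U V U' V' : lmodType k) (f : U -> U') (g : V -> V')
  (x : tensor U V) : tensor U' V' :=
  tlift (fun a b => tpure (f a) (g b)) x.

Definition tassoc (U V W : lmodType k) (x : tensor (tensor U V) W) : tensor U (tensor V W) :=
  tlift (fun t w => tlift (fun u v => tpure u (tpure v w)) t) x.

Definition tmul2 (A B C D E F : lmodType k) (f : A -> C -> E) (g : B -> D -> F)
  (x : tensor A B) (y : tensor C D) : tensor E F :=
  tlift (fun a b => tlift (fun c d => tpure (f a c) (g b d)) y) x.

End TensorOps.

Definition inspan (k : fieldType) (V : lmodType k) (P : V -> Prop) (x : V) : Prop :=
  exists s : seq (k * V), (forall p, p \in s -> P p.2) /\ x = \sum_(p <- s) p.1 *: p.2.

Record subspace (k : fieldType) (V : lmodType k) (P : V -> Prop) : Prop := {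
  subspace0 : P 0;
  subspaceD : forall x y, P x -> P y -> P (x + y);
  subspaceZ : forall (a : k) x, P x -> P (a *: x) }.

Record HomHopfData (k : fieldType) (H : lmodType k) := {
  hmul : H -> H -> H;
  hone : H;
  halpha : H -> H;
  halphai : H -> H;
  hDelta : H -> tensor H H;
  heps : {scalar H};
  hS : H -> H }.

Section HomHopf.
Variables (k : fieldType) (H : lmodType k) (A : HomHopfData H).
Local Notation mul := (hmul A).
Local Notation one := (hone A).
Local Notation alpha := (halpha A).
Local Notation alphai := (halphai A).
Local Notation Delta := (hDelta A).
Local Notation eps := (heps A).
Local Notation S := (hS A).

Record isHomHopf : Prop := {
  hh_alpha_lin : lin alpha;
  hh_alphaK : cancel alpha alphai;
  hh_alphaiK : cancel alphai alpha;
  hh_mul_bilin : bilin mul;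
  hh_alpha_mul : forall a b, alpha (mul a b) = mul (alpha a) (alpha b);
  hh_alpha_one : alpha one = one;
  hh_mul_assoc : forall a b c, mul (alpha a) (mul b c) = mul (mul a b) (alpha c);
  hh_one_mul : forall a, mul one a = alpha a;
  hh_mul_one : forall a, mul a one = alpha a;
  hh_Delta_lin : lin Delta;
  hh_Delta_mul : forall a b, Delta (mul a b) = tmul2 mul mul (Delta a) (Delta b);
  hh_Delta_one : Delta one = tpure one one;
  hh_Delta_alpha : forall h, Delta (alpha h) = tmap alpha alpha (Delta h);
  hh_eps_mul : forall a b, eps (mul a b) = eps a * eps b;
  hh_eps_one : eps one = 1;
  hh_eps_alpha : forall h, eps (alpha h) = eps h;
  hh_coassoc : forall h,
    tmap alphai Delta (Delta h) = tassoc (tmap Delta alphai (Delta h));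
  hh_counitl : forall h, tlift (fun a b => eps a *: b) (Delta h) = alphai h;
  hh_counitr : forall h, tlift (fun a b => eps b *: a) (Delta h) = alphai h;
  hh_S_lin : lin S;
  hh_S_alpha : forall h, S (alpha h) = alpha (S h);
  hh_S_l : forall h, tlift (fun a b => mul (S a) b) (Delta h) = eps h *: one;
  hh_S_r : forall h, tlift (fun a b => mul a (S b)) (Delta h) = eps h *: one }.

Record isHomBimodule (M : lmodType k) (mu mui : M -> M)
    (lact : H -> M -> M) (ract : M -> H -> M) : Prop := {
  hb_mu_lin : lin mu;
  hb_muK : cancel mu mui;
  hb_muiK : cancel mui mu;
  hb_lact_bilin : bilin lact;
  hb_ract_bilin : bilin ract;
  hb_lact_mor : forall a m, mu (lact a m) = lact (alpha a) (mu m);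
  hb_ract_mor : forall m a, mu (ract m a) = ract (mu m) (alpha a);
  hb_lassoc : forall a b m, lact (alpha a) (lact b m) = lact (mul a b) (mu m);
  hb_lunit : forall m, lact one m = mu m;
  hb_rassoc : forall m a b, ract (ract m a) (alpha b) = ract (mu m) (mul a b);
  hb_runit : forall m, ract m one = mu m;
  hb_bimod : forall a m b, lact (alpha a) (ract m b) = ract (lact a m) (alpha b) }.

Record isHomLComodule (M : lmodType k) (mu mui : M -> M) (rho : M -> tensor H M) : Prop := {
  hc_rho_lin : lin rho;
  hc_coassoc : forall m, tmap alphai rho (rho m) = tassoc (tmap Delta mui (rho m));
  hc_counit : forall m, tlift (fun a x => eps a *: x) (rho m) = mui m;
  hc_mor : forall m, rho (mu m) = tmap alpha mu (rho m) }.

Record isHomFODC (G : lmodType k) (gamma gammai : G -> G)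
    (lact : H -> G -> G) (ract : G -> H -> G) (d : H -> G) : Prop := {
  fo_bimodule : isHomBimodule gamma gammai lact ract;
  fo_d_lin : lin d;
  fo_leibniz : forall h g, d (mul h g) = lact h (d g) + ract (d h) g;
  fo_d_alpha : forall h, d (alpha h) = gamma (d h);
  fo_span : forall w, inspan (fun x => exists h g f, x = ract (lact h (d g)) f) w }.

Definition isLeftCovHomFODC (G : lmodType k) (gamma gammai : G -> G)
    (lact : H -> G -> G) (ract : G -> H -> G) (d : H -> G) : Prop :=
  isHomFODC gamma gammai lact ract d /\
  exists phi : G -> tensor H G,
    [/\ isHomLComodule gamma gammai phi,
        (forall h w g, phi (lact (alpha h) (ract w g)) =
           tmul2 mul lact (Delta (alpha h)) (tmul2 mul ract (phi w) (Delta g))) &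
        (forall h, phi (d h) = tmap id d (Delta h))].

Definition omegaG (G : lmodType k) (lact : H -> G -> G) (d : H -> G) (h : H) : G :=
  tlift (fun a b => lact (S a) (d b)) (Delta h).

Definition RGamma (G : lmodType k) (lact : H -> G -> G) (d : H -> G) (h : H) : Prop :=
  eps h = 0 /\ omegaG lact d h = 0.

Definition rightHomIdeal (R : H -> Prop) : Prop :=
  [/\ subspace R,
      (forall x, R x -> R (alpha x)),
      (forall y, R y -> exists x, R x /\ y = alpha x) &
      (forall r h, R r -> R (mul r h))].

Definition kerEps_pred : {pred H} := [pred x | eps x == 0].

Lemma kerEps_closed : GRing.subsemimod_closed kerEps_pred.
Proof.
split; [split|].
- by rewrite inE linear0.
- by move=> x y; rewrite !inE linearD => /eqP -> /eqP ->; rewrite addr0.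
- by move=> a x; rewrite !inE linearZ => /eqP ->; rewrite /= mulr0.
Qed.

HB.instance Definition _ := GRing.isSubmodClosed.Build k H kerEps_pred kerEps_closed.

Record kerEps := KerEps { keval :> H; _ : keval \in kerEps_pred }.
HB.instance Definition _ := [isSub for keval].
HB.instance Definition _ := [Choice of kerEps by <:].
HB.instance Definition _ := [SubChoice_isSubLmodule of kerEps by <:].

Definition bar (h : H) : kerEps := insubd 0 (h - eps h *: one).

Definition Omega1 := tensor H kerEps.

(* g . omega(h) *)
Definition omU (g h : H) : Omega1 := tpure g (bar h).

Definition lactU (g' : H) (w : Omega1) : Omega1 :=
  tlift (fun g (x : kerEps) => omU (mul (alphai g') g) (alpha (keval x))) w.

Definition ractU (w : Omega1) (g : H) : Omega1 :=
  tlift (fun g' (x : kerEps) =>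
    tlift (fun a b => omU (mul g' a) (mul (keval x) b)) (Delta g)) w.

Definition betaU (w : Omega1) : Omega1 :=
  tmap alpha (fun x : kerEps => bar (alpha (keval x))) w.

Definition dU (h : H) : Omega1 := tlift (fun a b => omU a b) (Delta h).

Definition NU (R : H -> Prop) (w : Omega1) : Prop :=
  inspan (fun x => exists h r, R r /\ x = lactU h (omegaG lactU dU r)) w.

Definition homSubbimoduleU (N : Omega1 -> Prop) : Prop :=
  [/\ subspace N,
      (forall h w, N w -> N (lactU h w)),
      (forall w h, N w -> N (ractU w h)),
      (forall w, N w -> N (betaU w)) &
      (forall w, N w -> exists w', N w' /\ w = betaU w')].

End HomHopf.

Arguments isHomHopf {k H} A.
Arguments isHomBimodule {k H} A {M}.
Arguments isHomLComodule {k H} A {M}.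
Arguments isHomFODC {k H} A {G}.
Arguments isLeftCovHomFODC {k H} A {G}.
Arguments omegaG {k H} A {G}.
Arguments RGamma {k H} A {G}.
Arguments rightHomIdeal {k H} A.
Arguments kerEps {k H} A.
Arguments bar {k H} A.
Arguments Omega1 {k H} A.
Arguments omU {k H} A.
Arguments lactU {k H} A.
Arguments ractU {k H} A.
Arguments betaU {k H} A.
Arguments dU {k H} A.
Arguments NU {k H} A.
Arguments homSubbimoduleU {k H} A.

From Pilot Require Import Defs.
From HB Require Import structures.
From mathcomp Require Import all_boot all_algebra.
From mathcomp Require Import boolp.
Set Implicit Arguments. Unset Strict Implicit. Unset Printing Implicit Defensive.
Import GRing.Theory.
Local Open Scope ring_scope.
Local Open Scope quotient_scope.

(* (1) Since [omega(r) = 1 (x) \bar{alpha^-1 r}] and [R] is [alpha]-stable, the subspace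
   [N = H . omega(R)] is spanned by the [g (x) \bar r] with [r] in [R]; it is therefore
   stable under the actions and [beta] because [R] is a right Hom-ideal. The actions, [beta],
   [d] and the coaction [g (x) \bar h |-> alpha(g_1) (x) g_2 (x) \bar{alpha^-1 h}] of
   [Omega^1(H)] all descend to [Omega^1(H)/N]. Finally [R_Gamma = R], because the functional
   [g (x) \bar h |-> eps(g) [h]] into [H/R] vanishes on [N].

   (2) [R_Gamma] is a right Hom-ideal by the Hom-analogue of [omega(r f) = S(f_1) omega(r) f_2].
   The map [pi (g (x) \bar h) = g . omega_Gamma(h)] is a surjective morphism of Hom-FODCs
   vanishing on [N]. Its kernel is exactly [N]: using the coaction,
   [m |-> m_(-1) . sigma(P m_(0))] is a left inverse of [pi] modulo [N], where [P] projects
   onto [omega_Gamma(H)] and [sigma(omega_Gamma x)] is the class of [omega_Omega(x)]. *)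

(** * Linear maps, spans and tensor products *)

Section LinearMapFacts.
Variables (k : fieldType) (U W : lmodType k) (f : U -> W).
Hypothesis hf : lin f.

Lemma lin0 : f 0 = 0.
Proof.
have := hf 1 0 0; rewrite !scale1r !addr0 => h.
by apply: (@addrI _ (f 0)); rewrite addr0 -h.
Qed.
Lemma linD x y : f (x + y) = f x + f y.
Proof. by have := hf 1 x y; rewrite !scale1r. Qed.
Lemma linZ a x : f (a *: x) = a *: f x.
Proof. by have := hf a x 0; rewrite !addr0 lin0 addr0. Qed.
Lemma linN x : f (- x) = - f x.
Proof. by rewrite -scaleN1r linZ scaleN1r. Qed.
Lemma linB x y : f (x - y) = f x - f y.
Proof. by rewrite linD linN. Qed.
Lemma lin_sum (I : Type) (s : seq I) (P : pred I) (F : I -> U) :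
  f (\sum_(i <- s | P i) F i) = \sum_(i <- s | P i) f (F i).
Proof. by apply: (big_morph f linD lin0). Qed.
End LinearMapFacts.

Section LinearMapConstructions.
Variable k : fieldType.

Lemma linP (U W : lmodType k) (f : U -> W) :
  (forall x y, f (x + y) = f x + f y) -> (forall a x, f (a *: x) = a *: f x) -> lin f.
Proof. by move=> hD hZ a x y; rewrite hD hZ. Qed.

Lemma bilinP (U V W : lmodType k) (f : U -> V -> W) :
  (forall x y v, f (x + y) v = f x v + f y v) -> (forall a x v, f (a *: x) v = a *: f x v) ->
  (forall u x y, f u (x + y) = f u x + f u y) -> (forall u a x, f u (a *: x) = a *: f u x) ->
  bilin f.
Proof. by move=> h1 h2 h3 h4; split=> ?; apply: linP. Qed.

Lemma lin_id (U : lmodType k) : lin (@id U).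
Proof. by []. Qed.

Lemma lin_comp (U V W : lmodType k) (f : V -> W) (g : U -> V) :
  lin f -> lin g -> lin (fun x => f (g x)).
Proof. by move=> hf hg a x y; rewrite hg hf. Qed.

Lemma scaler_lin (U : lmodType k) (c : k) : lin (fun x : U => c *: x).
Proof. by move=> a x y; rewrite scalerDr !scalerA mulrC. Qed.

Lemma linB_fun (U W : lmodType k) (F G : U -> W) : lin F -> lin G -> lin (fun x => F x - G x).
Proof. by move=> hF hG a x y; rewrite hF hG scalerBr addrACA opprD. Qed.

Lemma bilin_comp (U V U' V' W : lmodType k) (F : U' -> V' -> W)
  (L1 : U -> U') (L2 : V -> V') : bilin F -> lin L1 -> lin L2 -> bilin (fun a b => F (L1 a) (L2 b)).
Proof.
move=> hF h1 h2; split=> [v|u] c x y /=.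
  by rewrite h1 hF.1.
by rewrite h2 hF.2.
Qed.

Lemma ker_subspace (U W : lmodType k) (L : U -> W) : lin L -> subspace (fun w => L w = 0).
Proof.
move=> hL; split.
- exact: (lin0 hL).
- by move=> x y hx hy; rewrite (linD hL) hx hy addr0.
- by move=> a x hx; rewrite (linZ hL) hx scaler0.
Qed.

End LinearMapConstructions.

Section Span.
Variables (k : fieldType) (V : lmodType k) (P : V -> Prop).
Lemma inspan0 : inspan P 0.
Proof. by exists [::]; split=> //; rewrite big_nil. Qed.
Lemma inspan_gen x : P x -> inspan P x.
Proof.
move=> h; exists [:: (1, x)]; split; last by rewrite big_seq1 scale1r.
by move=> p; rewrite inE => /eqP ->.
Qed.
Lemma inspanD x y : inspan P x -> inspan P y -> inspan P (x + y).
Proof.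
move=> [s [hs ->]] [t [ht ->]]; exists (s ++ t); split; last by rewrite big_cat.
by move=> p; rewrite mem_cat => /orP [/hs|/ht].
Qed.
Lemma inspanZ a x : inspan P x -> inspan P (a *: x).
Proof.
move=> [s [hs ->]]; exists (map (fun p => (a * p.1, p.2)) s); split.
  by move=> p /mapP [q /hs hq ->].
by rewrite big_map scaler_sumr; apply: eq_bigr => p _; rewrite scalerA.
Qed.
Lemma inspan_subspace : subspace (inspan P).
Proof. by split; [apply: inspan0 | apply: inspanD | apply: inspanZ]. Qed.
Lemma inspan_sum (I : Type) (s : seq I) (F : I -> V) :
  (forall i, inspan P (F i)) -> inspan P (\sum_(i <- s) F i).
Proof.
move=> h; elim: s => [|i s ih]; first by rewrite big_nil; apply: inspan0.
by rewrite big_cons; apply: inspanD.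
Qed.
Lemma inspan_ind (Q : V -> Prop) : subspace Q -> (forall x, P x -> Q x) ->
  forall x, inspan P x -> Q x.
Proof.
move=> [h0 hD hZ] hP x [s [hs ->]]; elim: s hs => [|p s ih] hs.
  by rewrite big_nil.
rewrite big_cons; apply: hD; first by apply: hZ; apply: hP; apply: hs; rewrite inE eqxx.
by apply: ih => q hq; apply: hs; rewrite inE hq orbT.
Qed.

End Span.

Lemma inspan_mono (k : fieldType) (V : lmodType k) (P Q : V -> Prop) x :
  (forall y, P y -> inspan Q y) -> inspan P x -> inspan Q x.
Proof. by move=> h; apply: inspan_ind => //; exact: inspan_subspace. Qed.

Lemma inspan_lin (k : fieldType) (V W : lmodType k) (P : V -> Prop) (Q : W -> Prop) (f : V -> W) :
  lin f -> (forall x, P x -> Q (f x)) -> forall x, inspan P x -> inspan Q (f x).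
Proof.
move=> hf hPQ x; apply: (@inspan_ind _ _ _ (fun x => inspan Q (f x))).
  split; first by rewrite (lin0 hf); apply: inspan0.
    by move=> ? ? ? ?; rewrite (linD hf); apply: inspanD.
  by move=> ? ? ?; rewrite (linZ hf); apply: inspanZ.
by move=> y hy; apply: inspan_gen; apply: hPQ.
Qed.

Section Tensor.
Variables (k : fieldType) (U V : lmodType k).
Local Notation T := (tensor U V).

Section Bil.
Variables (W : lmodType k) (f : U -> V -> W).
Hypothesis hf : bilin f.

Lemma tlift_pure u v : tlift f (tpure u v) = f u v.
Proof. by rewrite /tlift /tpure tsum_repr // /tsum big_seq1. Qed.
Lemma tliftD x y : tlift f (x + y) = tlift f x + tlift f y.
Proof. by rewrite {1}/tlift /GRing.add /= /tadd tsum_repr // tsum_cat. Qed.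
Lemma tliftZ a x : tlift f (a *: x) = a *: tlift f x.
Proof. by rewrite {1}/tlift /GRing.scale /= /tscale tsum_repr // tsum_scale. Qed.
Lemma tlift_lin : lin (tlift f).
Proof. by apply: linP; [apply: tliftD | apply: tliftZ]. Qed.
Lemma tlift_sum (I : Type) (s : seq I) (P : pred I) (F : I -> T) :
  tlift f (\sum_(i <- s | P i) F i) = \sum_(i <- s | P i) tlift f (F i).
Proof. exact: (lin_sum tlift_lin). Qed.
End Bil.

Lemma tpure_bilin : bilin (@tpure k U V).
Proof.
split=> [v|u] a x y; apply: tensor_ext => W f hf; rewrite (tliftD hf) (tliftZ hf) !(tlift_pure hf).
  by rewrite (blD hf) (blZ hf).
by rewrite hf.2.
Qed.

Lemma tensor_sum (x : T) : x = \sum_(p <- repr x) tpure p.1 p.2.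
Proof.
apply: tensor_ext => W f hf; rewrite (tlift_sum hf); apply: eq_bigr => p _.
by rewrite (tlift_pure hf).
Qed.

Lemma lin_tlift (W W' : lmodType k) (L : W -> W') (G : U -> V -> W) (x : T) :
  lin L -> L (tlift G x) = tlift (fun a b => L (G a b)) x.
Proof. by move=> hL; rewrite /tlift /tsum (lin_sum hL). Qed.

Lemma tensor_lin_ext (W : lmodType k) (F G : T -> W) :
  lin F -> lin G -> (forall u v, F (tpure u v) = G (tpure u v)) -> forall x, F x = G x.
Proof.
move=> hF hG h x; rewrite (tensor_sum x) (lin_sum hF) (lin_sum hG).
by apply: eq_bigr => p _.
Qed.

Lemma tlift_ext (W : lmodType k) (F G : U -> V -> W) (x : T) :
  (forall u v, F u v = G u v) -> tlift F x = tlift G x.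
Proof. by move=> h; rewrite /tlift /tsum; apply: eq_bigr => p _. Qed.

Lemma tpureDl x y v : tpure (x + y) v = tpure x v + tpure y v :> T.
Proof. exact: (blD tpure_bilin). Qed.
Lemma tpureZl a x v : tpure (a *: x) v = a *: tpure x v :> T.
Proof. exact: (blZ tpure_bilin). Qed.
Lemma tpureDr u x y : tpure u (x + y) = tpure u x + tpure u y :> T.
Proof. exact: (linD (tpure_bilin.2 u)). Qed.
Lemma tpureZr u a x : tpure u (a *: x) = a *: tpure u x :> T.
Proof. exact: (linZ (tpure_bilin.2 u)). Qed.

End Tensor.

Section TensorMaps.
Variable k : fieldType.

Lemma tlift_tlift (U V U' V' W : lmodType k) (F : U' -> V' -> W)
  (G : U -> V -> tensor U' V') (x : tensor U V) :
  bilin F -> tlift F (tlift G x) = tlift (fun a b => tlift F (G a b)) x.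
Proof. by move=> hF; rewrite (lin_tlift _ _ (tlift_lin hF)). Qed.

Lemma tlift_tmap (U V U' V' W : lmodType k) (F : U' -> V' -> W) (f : U -> U') (g : V -> V') x :
  bilin F -> tlift F (tmap f g x) = tlift (fun a b => F (f a) (g b)) x.
Proof.
by move=> hF; rewrite /tmap tlift_tlift //; apply: tlift_ext => a b; rewrite tlift_pure.
Qed.

Lemma tlift_tmul2 (A B C D E F : lmodType k) (W : lmodType k) (G : E -> F -> W)
  (f : A -> C -> E) (g : B -> D -> F) x y :
  bilin G -> tlift G (tmul2 f g x y) =
    tlift (fun a b => tlift (fun c d => G (f a c) (g b d)) y) x.
Proof.
move=> hG; rewrite /tmul2 tlift_tlift //; apply: tlift_ext => a b.
rewrite tlift_tlift //; apply: tlift_ext => c d; by rewrite tlift_pure.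
Qed.

Lemma tassoc_fun_bilin (U V W : lmodType k) :
  bilin (fun (t : tensor U V) (w : W) => tlift (fun u v => tpure u (tpure v w)) t).
Proof.
split=> [w|t].
  apply: tlift_lin; split=> [v|u] a x y /=.
    by rewrite tpureDl tpureZl.
  by rewrite tpureDl tpureZl tpureDr tpureZr.
move=> a x y; rewrite /tlift /tsum scaler_sumr -big_split /=; apply: eq_bigr => p _.
by rewrite tpureDr tpureZr tpureDr tpureZr.
Qed.

Lemma tassoc_lin (U V W : lmodType k) : lin (@tassoc k U V W).
Proof. exact: tlift_lin (tassoc_fun_bilin U V W). Qed.

Lemma tassoc_pure (U V W : lmodType k) (t : tensor U V) (w : W) :
  tassoc (tpure t w) = tlift (fun u v => tpure u (tpure v w)) t.
Proof. by rewrite /tassoc tlift_pure //; apply: tassoc_fun_bilin. Qed.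

Lemma tmap_lin (U V U' V' : lmodType k) (f : U -> U') (g : V -> V') :
  lin f -> lin g -> lin (tmap f g).
Proof.
move=> hf hg; apply: tlift_lin; split=> [v|u] a x y /=.
  by rewrite (linD hf) (linZ hf) tpureDl tpureZl.
by rewrite (linD hg) (linZ hg) tpureDr tpureZr.
Qed.

Lemma tmap_pure (U V U' V' : lmodType k) (f : U -> U') (g : V -> V') u v :
  lin f -> lin g -> tmap f g (tpure u v) = tpure (f u) (g v).
Proof.
move=> hf hg; rewrite /tmap tlift_pure //; split=> [w|u'] a x y /=.
  by rewrite (linD hf) (linZ hf) tpureDl tpureZl.
by rewrite (linD hg) (linZ hg) tpureDr tpureZr.
Qed.

Definition trilin (U V X W : lmodType k) (F : U -> V -> X -> W) : Prop :=
  [/\ forall b c, lin (fun a => F a b c), forall a c, lin (fun b => F a b c) &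
      forall a b, lin (F a b)].

Lemma bilin_tlift_trilin (U V X W : lmodType k) (F : U -> V -> X -> W) :
  trilin F -> bilin (fun a (t : tensor V X) => tlift (F a) t).
Proof.
case=> h1 h2 h3; split=> [t|a].
  move=> c x y; rewrite /tlift /tsum scaler_sumr -big_split /=; apply: eq_bigr => p _.
  by rewrite (h1 _ _ c x y).
apply: tlift_lin; split=> [v|u]; [exact: h2 | exact: h3].
Qed.

Lemma bilin_tlift_param (U V X Y W : lmodType k)
  (K : U -> V -> X -> Y -> W) (t : tensor X Y) :
  (forall c d, bilin (fun a b => K a b c d)) -> bilin (fun a b => tlift (K a b) t).
Proof.
move=> hK; split=> [v|u] c x y; rewrite /tlift /tsum scaler_sumr -big_split /=;
  apply: eq_bigr => p _.
  by rewrite ((hK p.1 p.2).1 v c x y).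
by rewrite ((hK p.1 p.2).2 u c x y).
Qed.

Lemma lin_tlift_param (U X Y W : lmodType k)
  (K : U -> X -> Y -> W) (t : tensor X Y) :
  (forall c d, lin (fun a => K a c d)) -> lin (fun a => tlift (K a) t).
Proof.
move=> hK c x y; rewrite /tlift /tsum scaler_sumr -big_split /=; apply: eq_bigr => p _.
by rewrite (hK p.1 p.2 c x y).
Qed.

Lemma tlift_exchange (U V X Y W : lmodType k)
  (F : U -> V -> X -> Y -> W) (s : tensor U V) (t : tensor X Y) :
  tlift (fun a b => tlift (F a b) t) s = tlift (fun c d => tlift (fun a b => F a b c d) s) t.
Proof. by rewrite /tlift /tsum; apply: exchange_big. Qed.

Lemma tlift_tassoc (U V X W : lmodType k) (F : U -> tensor V X -> W)
  (x : tensor (tensor U V) X) :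
  bilin F -> tlift F (tassoc x) = tlift (fun t w => tlift (fun u v => F u (tpure v w)) t) x.
Proof.
move=> hF; rewrite /tassoc tlift_tlift //; apply: tlift_ext => t w.
rewrite tlift_tlift //; apply: tlift_ext => u v; by rewrite tlift_pure.
Qed.

Lemma bilin_tlift_tassoc (U V X W : lmodType k) (F : U -> tensor V X -> W) :
  bilin F -> bilin (fun (t : tensor U V) (w : X) => tlift (fun u v => F u (tpure v w)) t).
Proof.
move=> hF; split=> [w|t].
  apply: tlift_lin; apply: (bilin_comp hF) => //; exact: (tpure_bilin _ _).1.
apply: lin_tlift_param => u v; apply: lin_comp; [exact: hF.2 | exact: (tpure_bilin _ _).2].
Qed.

Lemma tmap_tmap (U V U' V' U'' V'' : lmodType k) (f : U' -> U'') (g : V' -> V'')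
  (f' : U -> U') (g' : V -> V') x :
  lin f -> lin g -> tmap f g (tmap f' g' x) = tmap (fun a => f (f' a)) (fun b => g (g' b)) x.
Proof.
move=> hf hg; apply: tensor_ext => W F hF; rewrite !tlift_tmap //.
exact: bilin_comp.
Qed.

Lemma tmap_ext (U V U' V' : lmodType k) (f1 f2 : U -> U') (g1 g2 : V -> V') x :
  (forall a, f1 a = f2 a) -> (forall b, g1 b = g2 b) -> tmap f1 g1 x = tmap f2 g2 x.
Proof. by move=> h1 h2; apply: tlift_ext => a b; rewrite h1 h2. Qed.

Lemma tassoc_nat (U V X X' : lmodType k) (h : X -> X') (Y : tensor (tensor U V) X) :
  lin h -> tassoc (tmap id h Y) = tmap id (tmap id h) (tassoc Y).
Proof.
move=> hh; apply: tensor_ext => W F hF.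
rewrite tlift_tassoc // tlift_tmap; last exact: bilin_tlift_tassoc hF.
rewrite tlift_tmap //.
rewrite tlift_tassoc; last exact: bilin_comp hF (@lin_id _ _) (tmap_lin (@lin_id _ _) hh).
apply: tlift_ext => t w; apply: tlift_ext => u v.
by rewrite tmap_pure.
Qed.

Lemma tmul2_nat_r (A B C D D' E F F' : lmodType k) (f : A -> C -> E) (g : B -> D -> F)
  (g' : B -> D' -> F') (p : F -> F') (p' : D -> D') x y :
  bilin f -> lin p -> (forall d, lin (g' d)) -> (forall b d, p (g b d) = g' b (p' d)) ->
  tmap id p (tmul2 f g x y) = tmul2 f g' x (tmap id p' y).
Proof.
move=> hf hp hg' e; apply: tensor_ext => W G hG.
rewrite tlift_tmap // !tlift_tmul2 //; last exact: bilin_comp hG (@lin_id _ _) hp.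
apply: tlift_ext => a b; rewrite tlift_tmap //; last first.
  apply: bilin_comp hG _ _; [exact: hf.2 | exact: hg'].
by apply: tlift_ext => c d; rewrite e.
Qed.

Lemma tmul2_nat_l (A B B' C D E F F' : lmodType k) (f : A -> C -> E) (g : B -> D -> F)
  (g' : B' -> D -> F') (p : F -> F') (p' : B -> B') x y :
  bilin f -> lin p -> (forall d, lin (fun b => g' b d)) -> (forall b d, p (g b d) = g' (p' b) d) ->
  tmap id p (tmul2 f g x y) = tmul2 f g' (tmap id p' x) y.
Proof.
move=> hf hp hg' e; apply: tensor_ext => W G hG.
rewrite tlift_tmap // !tlift_tmul2 //; last exact: bilin_comp hG (@lin_id _ _) hp.
rewrite tlift_tmap //; last first.
  apply: bilin_tlift_param => c d; apply: bilin_comp hG _ _; [exact: hf.1 | exact: hg'].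
apply: tlift_ext => a b; apply: tlift_ext => c d; by rewrite e.
Qed.
End TensorMaps.

Section TensorMul.
Variables (k : fieldType) (A B C D E F : lmodType k) (f : A -> C -> E) (g : B -> D -> F).
Hypotheses (hf : bilin f) (hg : bilin g).
Lemma tmul2_linl y : lin (fun x => tmul2 f g x y).
Proof.
apply: tlift_lin; apply: bilin_tlift_param => c d.
apply: (bilin_comp (tpure_bilin _ _)); [exact: hf.1 | exact: hg.1].
Qed.
Lemma tmul2_linr x : lin (tmul2 f g x).
Proof.
apply: lin_tlift_param => a b; apply: tlift_lin.
apply: (bilin_comp (tpure_bilin _ _)); [exact: hf.2 | exact: hg.2].
Qed.
End TensorMul.

(** * Quotient modules *)

Section QuotientModule.
Variables (k : fieldType) (M : lmodType k) (N : M -> Prop) (hN : subspace N).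

Lemma subN x : N x -> N (- x).
Proof. by move=> h; rewrite -scaleN1r; apply: (subspaceZ hN). Qed.

Definition qrel (x y : M) : bool := `[< N (x - y) >].
Lemma qrel_refl : reflexive qrel.
Proof. by move=> x; apply/asboolP; rewrite subrr; apply: (subspace0 hN). Qed.
Lemma qrel_sym : symmetric qrel.
Proof.
move=> x y; apply/asboolP/asboolP => h.
  by rewrite -opprB; apply: subN.
by rewrite -opprB; apply: subN.
Qed.
Lemma qrel_trans : transitive qrel.
Proof.
move=> y x z /asboolP h1 /asboolP h2; apply/asboolP.
have -> : x - z = (x - y) + (y - z) by rewrite addrA subrK.
exact: (subspaceD hN).
Qed.

Canonical qrel_equiv := EquivRel qrel qrel_refl qrel_sym qrel_trans.
Definition quotM := {eq_quot qrel}.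
HB.instance Definition _ : EqQuotient _ qrel quotM := EqQuotient.on quotM.
HB.instance Definition _ := Choice.on quotM.

Definition qp (x : M) : quotM := \pi_quotM x.

Lemma qpE x y : qp x = qp y <-> N (x - y).
Proof.
split; first by move/eqmodP/asboolP.
by move=> h; apply/eqmodP/asboolP.
Qed.

Lemma qp_repr (a : quotM) : qp (repr a) = a.
Proof. exact: reprK. Qed.

Lemma repr_qp x : N (repr (qp x) - x).
Proof. by apply/qpE; rewrite qp_repr. Qed.

Definition qzero : quotM := qp 0.
Definition qadd (a b : quotM) : quotM := qp (repr a + repr b).
Definition qopp (a : quotM) : quotM := qp (- repr a).
Definition qscale (c : k) (a : quotM) : quotM := qp (c *: repr a).

Lemma qaddE x y : qadd (qp x) (qp y) = qp (x + y).
Proof.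
apply/qpE; have h1 := repr_qp x; have h2 := repr_qp y.
have -> : repr (qp x) + repr (qp y) - (x + y) = (repr (qp x) - x) + (repr (qp y) - y).
  by rewrite opprD addrACA.
exact: (subspaceD hN).
Qed.
Lemma qoppE x : qopp (qp x) = qp (- x).
Proof.
apply/qpE; have h1 := repr_qp x.
have -> : - repr (qp x) - - x = - (repr (qp x) - x) by rewrite opprB opprK addrC.
exact: subN.
Qed.
Lemma qscaleE c x : qscale c (qp x) = qp (c *: x).
Proof.
apply/qpE; have h1 := repr_qp x.
rewrite -scalerBr; exact: (subspaceZ hN).
Qed.

Lemma qp_ind (P : quotM -> Prop) : (forall x, P (qp x)) -> forall a, P a.
Proof. by move=> h a; rewrite -[a]qp_repr. Qed.

Lemma qaddA : associative qadd.
Proof.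
by elim/qp_ind=> x; elim/qp_ind=> y; elim/qp_ind=> z; rewrite !qaddE addrA.
Qed.
Lemma qaddC : commutative qadd.
Proof. by elim/qp_ind=> x; elim/qp_ind=> y; rewrite !qaddE addrC. Qed.
Lemma qadd0 : left_id qzero qadd.
Proof. by elim/qp_ind=> x; rewrite /qzero qaddE add0r. Qed.
Lemma qaddN : left_inverse qzero qopp qadd.
Proof. by elim/qp_ind=> x; rewrite qoppE qaddE addNr. Qed.

HB.instance Definition _ := GRing.isZmodule.Build quotM qaddA qaddC qadd0 qaddN.
Lemma qpD x y : qp x + qp y = qp (x + y).
Proof. exact: qaddE. Qed.

Lemma qscaleA a b x : qscale a (qscale b x) = qscale (a * b) x.
Proof. by elim/qp_ind: x => x; rewrite !qscaleE scalerA. Qed.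
Lemma qscale1 : left_id 1 qscale.
Proof. by elim/qp_ind=> x; rewrite qscaleE scale1r. Qed.
Lemma qscaleDr : right_distributive qscale +%R.
Proof.
move=> a; elim/qp_ind=> x; elim/qp_ind=> y.
by rewrite qpD !qscaleE qpD scalerDr.
Qed.
Lemma qscaleDl x : {morph qscale^~ x : a b / a + b}.
Proof.
move=> a b; elim/qp_ind: x => x.
by rewrite !qscaleE qpD scalerDl.
Qed.

HB.instance Definition _ := GRing.Zmodule_isLmodule.Build k quotM qscaleA qscale1 qscaleDr qscaleDl.

Lemma qp_lin : lin qp.
Proof.
move=> a x y.
have -> : a *: qp x + qp y = qadd (qscale a (qp x)) (qp y) by [].
by rewrite qscaleE qaddE.
Qed.

Lemma qp0 x : qp x = 0 <-> N x.
Proof.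
have -> : (0 : quotM) = qp 0 by rewrite -(lin0 qp_lin).
by rewrite qpE subr0.
Qed.

Definition qmap (L : M -> M) (a : quotM) : quotM := qp (L (repr a)).
Lemma qmapE (L : M -> M) : lin L -> (forall x, N x -> N (L x)) ->
  forall x, qmap L (qp x) = qp (L x).
Proof.
move=> hL hLN x; apply/qpE; rewrite -(linB hL); apply: hLN; exact: repr_qp.
Qed.

End QuotientModule.

Section Factor.
Variables (k : fieldType) (M Q : lmodType k) (pi : M -> Q).
Hypotheses (hpi : lin pi) (hsurj : forall q, exists w, pi w = q).

Definition preim (q : Q) : M := projT1 (cid (hsurj q)).
Lemma preimK q : pi (preim q) = q.
Proof. exact: projT2 (cid (hsurj q)). Qed.

(* Locked, so that rewriting with [factorE] does not unfold the factors nested in its argument. *)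
Fact factor_key : unit. Proof. by []. Qed.
Definition factor (V : lmodType k) (L : M -> V) (q : Q) : V :=
  locked_with factor_key (L (preim q)).

Variables (V : lmodType k) (L : M -> V).
Hypotheses (hL : lin L) (hker : forall w, pi w = 0 -> L w = 0).

Lemma factorE w : factor L (pi w) = L w.
Proof.
apply/eqP; rewrite /factor unlock -subr_eq0 -(linB hL); apply/eqP/hker.
by rewrite (linB hpi) preimK subrr.
Qed.

Lemma factor_lin : lin (factor L).
Proof. by move=> a x y; rewrite -(preimK x) -(preimK y) -hpi !factorE hL. Qed.

End Factor.

(** * Monoidal Hom-Hopf algebras *)

Section HomHopfTheory.
Variables (k : fieldType) (H : lmodType k) (A : HomHopfData H).
Hypothesis hA : isHomHopf A.
Local Notation mul := (hmul A).
Local Notation one := (hone A).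
Local Notation alpha := (halpha A).
Local Notation alphai := (halphai A).
Local Notation Delta := (hDelta A).
Local Notation eps := (heps A).
Local Notation S := (hS A).
Local Notation Om := (Omega1 A).
Local Notation KE := (kerEps A).
Local Notation bar := (bar A).
Local Notation omU := (omU A).
Local Notation lactU := (lactU A).
Local Notation ractU := (ractU A).
Local Notation betaU := (betaU A).
Local Notation dU := (dU A).

Definition sw (W : lmodType k) (h : H) (f : H -> H -> W) : W := tlift f (Delta h).

Lemma hmulDl x y b : mul (x + y) b = mul x b + mul y b.
Proof. exact: (blD (hh_mul_bilin hA)). Qed.
Lemma hmulZl a x b : mul (a *: x) b = a *: mul x b.
Proof. exact: (blZ (hh_mul_bilin hA)). Qed.
Lemma hmulDr b x y : mul b (x + y) = mul b x + mul b y.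
Proof. exact: (linD ((hh_mul_bilin hA).2 b)). Qed.
Lemma hmulZr b a x : mul b (a *: x) = a *: mul b x.
Proof. exact: (linZ ((hh_mul_bilin hA).2 b)). Qed.
Lemma hmulNl x b : mul (- x) b = - mul x b.
Proof. exact: (blN (hh_mul_bilin hA)). Qed.
Lemma hmulBl x y b : mul (x - y) b = mul x b - mul y b.
Proof. by rewrite hmulDl hmulNl. Qed.

Lemma alphaD x y : alpha (x + y) = alpha x + alpha y.
Proof. exact: (linD (hh_alpha_lin hA)). Qed.
Lemma alphaZ a x : alpha (a *: x) = a *: alpha x.
Proof. exact: (linZ (hh_alpha_lin hA)). Qed.
Lemma alphaK x : alphai (alpha x) = x.
Proof. exact: (hh_alphaK hA). Qed.
Lemma alphaiK x : alpha (alphai x) = x.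
Proof. exact: (hh_alphaiK hA). Qed.
Lemma alpha_inj : injective alpha.
Proof. exact: (can_inj (hh_alphaK hA)). Qed.

Lemma alphai_lin : lin alphai.
Proof.
move=> a x y; apply: alpha_inj.
by rewrite alphaiK (hh_alpha_lin hA) !alphaiK.
Qed.
Lemma alphaiD x y : alphai (x + y) = alphai x + alphai y.
Proof. exact: (linD alphai_lin). Qed.
Lemma alphaiZ a x : alphai (a *: x) = a *: alphai x.
Proof. exact: (linZ alphai_lin). Qed.

Lemma alpha_one : alpha one = one.
Proof. exact: (hh_alpha_one hA). Qed.
Lemma alphai_one : alphai one = one.
Proof. by rewrite -{1}alpha_one alphaK. Qed.
Lemma alpha_mul a b : alpha (mul a b) = mul (alpha a) (alpha b).
Proof. exact: (hh_alpha_mul hA). Qed.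
Lemma alphai_mul a b : alphai (mul a b) = mul (alphai a) (alphai b).
Proof. by apply: alpha_inj; rewrite alphaiK alpha_mul !alphaiK. Qed.
Lemma hmul1l a : mul one a = alpha a.
Proof. exact: (hh_one_mul hA). Qed.
Lemma hmul1r a : mul a one = alpha a.
Proof. exact: (hh_mul_one hA). Qed.
Lemma hmulA a b c : mul (alpha a) (mul b c) = mul (mul a b) (alpha c).
Proof. exact: (hh_mul_assoc hA). Qed.

Lemma epsD x y : eps (x + y) = eps x + eps y.
Proof. exact: linearD. Qed.
Lemma epsZ a x : eps (a *: x) = a * eps x.
Proof. exact: linearZ. Qed.
Lemma eps0 : eps 0 = 0.
Proof. exact: linear0. Qed.
Lemma epsB x y : eps (x - y) = eps x - eps y.
Proof. exact: linearB. Qed.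
Lemma eps_one : eps one = 1.
Proof. exact: (hh_eps_one hA). Qed.
Lemma eps_alpha h : eps (alpha h) = eps h.
Proof. exact: (hh_eps_alpha hA). Qed.
Lemma eps_alphai h : eps (alphai h) = eps h.
Proof. by rewrite -{2}(alphaiK h) eps_alpha. Qed.
Lemma eps_mul a b : eps (mul a b) = eps a * eps b.
Proof. exact: (hh_eps_mul hA). Qed.

Lemma S_lin : lin S.
Proof. exact: (hh_S_lin hA). Qed.
Lemma S_alpha h : S (alpha h) = alpha (S h).
Proof. exact: (hh_S_alpha hA). Qed.
Lemma S_alphai h : S (alphai h) = alphai (S h).
Proof. by apply: alpha_inj; rewrite -S_alpha !alphaiK. Qed.

Lemma alpha_lin : lin alpha.
Proof. exact: (hh_alpha_lin hA). Qed.
Lemma mul_bilin : bilin mul.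
Proof. exact: (hh_mul_bilin hA). Qed.
Lemma mull_lin g : lin (mul g).
Proof. exact: (mul_bilin.2 g). Qed.
Lemma mulr_lin g : lin (fun a => mul a g).
Proof. exact: (mul_bilin.1 g). Qed.

Lemma sw_ext (W : lmodType k) h (f g : H -> H -> W) :
  (forall a b, f a b = g a b) -> sw h f = sw h g.
Proof. exact: tlift_ext. Qed.

Lemma lin_sw (W W' : lmodType k) (L : W -> W') h (f : H -> H -> W) :
  lin L -> L (sw h f) = sw h (fun a b => L (f a b)).
Proof. exact: lin_tlift. Qed.

Section SweedlerBilinear.
Variables (W : lmodType k) (f : H -> H -> W) (hf : bilin f).
Lemma swD x y : sw (x + y) f = sw x f + sw y f.
Proof. by rewrite /sw (linD (hh_Delta_lin hA)) tliftD. Qed.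
Lemma swZ a x : sw (a *: x) f = a *: sw x f.
Proof. by rewrite /sw (linZ (hh_Delta_lin hA)) tliftZ. Qed.
Lemma sw_lin : lin (fun h => sw h f).
Proof. by move=> a x y; rewrite swD swZ. Qed.
Lemma sw_alpha h : sw (alpha h) f = sw h (fun a b => f (alpha a) (alpha b)).
Proof. by rewrite /sw (hh_Delta_alpha hA) tlift_tmap. Qed.
Lemma sw_mul a b :
  sw (mul a b) f = sw a (fun a1 a2 => sw b (fun b1 b2 => f (mul a1 b1) (mul a2 b2))).
Proof. by rewrite /sw (hh_Delta_mul hA) tlift_tmul2. Qed.
Lemma sw_one : sw one f = f one one.
Proof. by rewrite /sw (hh_Delta_one hA) tlift_pure. Qed.
End SweedlerBilinear.

Lemma Delta_alphai h : Delta (alphai h) = tmap alphai alphai (Delta h).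
Proof.
rewrite -{2}(alphaiK h) (hh_Delta_alpha hA) {2}/tmap (lin_tlift _ _ (tmap_lin alphai_lin alphai_lin)).
rewrite [LHS]tensor_sum; apply: eq_bigr => p _.
by rewrite tmap_pure ?alphaK //; apply: alphai_lin.
Qed.

Lemma sw_alphai (W : lmodType k) (f : H -> H -> W) h : bilin f ->
  sw (alphai h) f = sw h (fun a b => f (alphai a) (alphai b)).
Proof. by move=> hf; rewrite /sw Delta_alphai tlift_tmap. Qed.

Lemma counitl h : sw h (fun a b => eps a *: b) = alphai h.
Proof. exact: (hh_counitl hA). Qed.
Lemma counitr h : sw h (fun a b => eps b *: a) = alphai h.
Proof. exact: (hh_counitr hA). Qed.
Lemma counitlL (W : lmodType k) (L : H -> W) h :
  lin L -> sw h (fun a b => eps a *: L b) = L (alphai h).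
Proof.
move=> hL; rewrite -counitl (lin_sw _ _ hL); apply: sw_ext => a b.
by rewrite (linZ hL).
Qed.
Lemma counitrL (W : lmodType k) (L : H -> W) h :
  lin L -> sw h (fun a b => eps b *: L a) = L (alphai h).
Proof.
move=> hL; rewrite -counitr (lin_sw _ _ hL); apply: sw_ext => a b.
by rewrite (linZ hL).
Qed.
Lemma antipode_l h : sw h (fun a b => mul (S a) b) = eps h *: one.
Proof. exact: (hh_S_l hA). Qed.
Lemma antipode_r h : sw h (fun a b => mul a (S b)) = eps h *: one.
Proof. exact: (hh_S_r hA). Qed.

Lemma coassoc (W : lmodType k) (F : H -> H -> H -> W) h : trilin F ->
  sw h (fun a b => sw b (fun b1 b2 => F (alphai a) b1 b2)) =
  sw h (fun a b => sw a (fun a1 a2 => F a1 a2 (alphai b))).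
Proof.
move=> hF; have hG := bilin_tlift_trilin hF.
have := congr1 (tlift (fun a t => tlift (F a) t)) (hh_coassoc hA h).
rewrite tlift_tmap // => E; rewrite /sw; etransitivity; first exact: E.
rewrite /tmap (lin_tlift _ _ (@tassoc_lin _ _ _ _)) tlift_tlift //; apply: tlift_ext => a b.
rewrite tassoc_pure tlift_tlift //; apply: tlift_ext => u v.
rewrite tlift_pure //; rewrite tlift_pure //.
by case: hF => _ h2 h3; split=> [?|?]; [apply: h2 | apply: h3].
Qed.

Lemma coassoc_alpha (W : lmodType k) (F : H -> H -> H -> W) h : trilin F ->
  sw h (fun a b => sw b (fun b1 b2 => F a b1 b2)) =
  sw h (fun a b => sw a (fun a1 a2 => F (alpha a1) a2 (alphai b))).
Proof.
case=> hF1 hF2 hF3; have hG : trilin (fun x => F (alpha x)).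
  by split=> [b c|x c|x b]; [exact: lin_comp (hF1 b c) alpha_lin | exact: hF2 | exact: hF3].
rewrite -(coassoc h hG); apply: sw_ext => a b; apply: sw_ext => c e.
by rewrite alphaiK.
Qed.

Lemma sw_exchange (W : lmodType k) (a b : H) (F : H -> H -> H -> H -> W) :
  sw a (fun x y => sw b (F x y)) = sw b (fun u v => sw a (fun x y => F x y u v)).
Proof. exact: tlift_exchange. Qed.

Lemma lin_sw_param (U W : lmodType k) (x : H) (K : U -> H -> H -> W) :
  (forall c d, lin (fun a => K a c d)) -> lin (fun a => sw x (K a)).
Proof. exact: lin_tlift_param. Qed.

Lemma sw_sub (W : lmodType k) h (f g : H -> H -> W) :
  sw h (fun a b => f a b - g a b) = sw h f - sw h g.
Proof. by rewrite /sw /tlift /tsum -sumrB. Qed.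
Lemma sw_scale (W : lmodType k) h (f : H -> H -> W) c :
  sw h (fun a b => c *: f a b) = c *: sw h f.
Proof. by rewrite /sw /tlift /tsum scaler_sumr. Qed.

Lemma eq_swD (W : lmodType k) h (f g g' : H -> H -> W) :
  (forall a b, f a b = g a b + g' a b) -> sw h f = sw h g + sw h g'.
Proof. by move=> e; rewrite /sw /tlift /tsum -big_split; apply: eq_bigr => p _. Qed.
Lemma eq_swZ (W : lmodType k) h (f g : H -> H -> W) c :
  (forall a b, f a b = c *: g a b) -> sw h f = c *: sw h g.
Proof. by move=> e; rewrite /sw /tlift /tsum scaler_sumr; apply: eq_bigr => p _. Qed.

Lemma sw_zero (W : lmodType k) h (f : H -> H -> W) : (forall a b, f a b = 0) -> sw h f = 0.
Proof. by move=> e; rewrite /sw /tlift /tsum big1 // => p _; rewrite e. Qed.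

Lemma sw_inspan (V : lmodType k) (P : V -> Prop) h (F : H -> H -> V) :
  (forall a b, inspan P (F a b)) -> inspan P (sw h F).
Proof. by move=> hF; apply: inspan_sum => p; apply: hF. Qed.

Lemma hmul4 u v s t : mul (mul u v) (mul s t) = mul (alpha u) (mul (alphai (mul v s)) t).
Proof.
have e1 : mul (mul u v) (mul s t) = mul (alpha u) (mul v (alphai (mul s t))).
  by rewrite hmulA alphaiK.
have e2 : mul (alphai (mul v s)) t = mul v (alphai (mul s t)).
  rewrite !alphai_mul -{1}(alphaiK t) -hmulA alphaiK //.
by rewrite e1 e2.
Qed.

Lemma antipode_mul_rev x y : sw x (fun u t => sw y (fun v s => mul (mul u v) (mul (S s) (S t)))) =
  (eps x * eps y) *: one.
Proof.
transitivity (sw x (fun u t => eps y *: alpha (mul u (S t)))).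
  apply: sw_ext => u t.
  transitivity (sw y (fun v s => (fun z => mul (alpha u) (mul (alphai z) (S t))) (mul v (S s)))).
    by apply: sw_ext => v s; rewrite hmul4.
  rewrite -(lin_sw _ _ (lin_comp (mull_lin _) (lin_comp (mulr_lin _) alphai_lin))) antipode_r.
  rewrite alphaiZ alphai_one hmulZl hmulZr hmul1l.
  by rewrite alpha_mul.
rewrite -(lin_sw _ _ (lin_comp (scaler_lin _) alpha_lin)) antipode_r alphaZ alpha_one.
by rewrite scalerA mulrC.
Qed.

(* [S(a_1 b_1) ((a_2 b_2) (S(b_3) S(a_3)))] reduces to [S(a b)] through [antipode_r] and,
   after regrouping by coassociativity, to [S(b) S(a)] through [antipode_l]. *)
Definition antipode_sandwich a b : H :=
  sw a (fun a1 a2 => sw b (fun b1 b2 => mul (S (mul a1 b1))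
    (sw a2 (fun u t => sw b2 (fun v s => mul (mul u v) (mul (S s) (S t))))))).

Lemma antipode_sandwich_S a b : antipode_sandwich a b = S (mul a b).
Proof.
transitivity (sw a (fun a1 a2 => sw b (fun b1 b2 =>
    eps b2 *: (fun y => eps a2 *: alpha (S (mul a1 y))) b1))).
  apply: sw_ext => a1 a2; apply: sw_ext => b1 b2.
  by rewrite antipode_mul_rev hmulZr hmul1r scalerA mulrC.
transitivity (sw a (fun a1 a2 => eps a2 *: (fun x => alpha (S (mul x (alphai b)))) a1)).
  apply: sw_ext => a1 a2; rewrite counitrL //.
  exact: lin_comp (scaler_lin _) (lin_comp alpha_lin (lin_comp S_lin (mull_lin _))).
rewrite counitrL; last exact: lin_comp alpha_lin (lin_comp S_lin (mulr_lin _)).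
by rewrite -alphai_mul S_alphai alphaiK.
Qed.

Lemma antipode_sandwich_regroup a b : antipode_sandwich a b =
  sw a (fun a1 a2 => sw b (fun b1 b2 => mul (sw (mul a1 b1) (fun x y => mul (S x) y))
    (alpha (mul (S (alphai b2)) (S (alphai a2)))))).
Proof.
transitivity (sw a (fun a1 a2 => sw a2 (fun u t => sw b (fun b1 b2 => sw b2 (fun v s =>
    mul (S (mul a1 b1)) (mul (mul u v) (mul (S s) (S t)))))))).
  apply: sw_ext => a1 a2; rewrite sw_exchange; apply: sw_ext => b1 b2.
  rewrite (lin_sw _ _ (mull_lin _)); apply: sw_ext => u t.
  by rewrite (lin_sw _ _ (mull_lin _)).
rewrite (coassoc_alpha a (F := fun x u t => sw b (fun b1 b2 => sw b2 (fun v s =>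
    mul (S (mul x b1)) (mul (mul u v) (mul (S s) (S t))))))); last first.
  split=> [u t|x t|x u]; apply: lin_sw_param => b1 b2; apply: lin_sw_param => v s.
  - exact: lin_comp (mulr_lin _) (lin_comp S_lin (mulr_lin _)).
  - exact: lin_comp (mull_lin _) (lin_comp (mulr_lin _) (mulr_lin _)).
  - exact: lin_comp (mull_lin _) (lin_comp (mull_lin _) (lin_comp (mull_lin _) S_lin)).
apply: sw_ext => a1 a2.
transitivity (sw a1 (fun c d => sw b (fun b1 b2 => sw b1 (fun e f =>
    mul (mul (S (mul c e)) (mul d f)) (alpha (mul (S (alphai b2)) (S (alphai a2)))))))).
  apply: sw_ext => c d; rewrite (coassoc_alpha b (F := fun y v s =>
    mul (S (mul (alpha c) y)) (mul (mul d v) (mul (S s) (S (alphai a2)))))); last first.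
    split=> [v s|y s|y v].
    - exact: lin_comp (mulr_lin _) (lin_comp S_lin (mull_lin _)).
    - exact: lin_comp (mull_lin _) (lin_comp (mulr_lin _) (mull_lin _)).
    - exact: lin_comp (mull_lin _) (lin_comp (mull_lin _) (lin_comp (mulr_lin _) S_lin)).
  apply: sw_ext => b1 b2; apply: sw_ext => e f.
  by rewrite -alpha_mul S_alpha hmulA.
rewrite sw_exchange; apply: sw_ext => b1 b2.
rewrite sw_mul; last exact: bilin_comp mul_bilin S_lin (@lin_id _ _).
rewrite (lin_sw _ _ (mulr_lin _)); apply: sw_ext => c d.
by rewrite (lin_sw _ _ (mulr_lin _)).
Qed.

Lemma S_mul a b : S (mul a b) = mul (S b) (S a).
Proof.
rewrite -antipode_sandwich_S antipode_sandwich_regroup.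
transitivity (sw a (fun a1 a2 => eps a1 *: sw b (fun b1 b2 => eps b1 *:
    (fun y => alpha (alpha (mul (S (alphai y)) (S (alphai a2))))) b2))).
  apply: sw_ext => a1 a2; rewrite -sw_scale; apply: sw_ext => b1 b2.
  by rewrite antipode_l eps_mul hmulZl hmul1l scalerA.
transitivity (sw a (fun a1 a2 => eps a1 *:
    (fun y => alpha (alpha (mul (S (alphai (alphai b))) (S (alphai y))))) a2)).
  apply: sw_ext => a1 a2; rewrite counitlL //.
  exact: lin_comp alpha_lin (lin_comp alpha_lin (lin_comp (mulr_lin _) (lin_comp S_lin alphai_lin))).
rewrite counitlL; last first.
  exact: lin_comp alpha_lin (lin_comp alpha_lin (lin_comp (mull_lin _) (lin_comp S_lin alphai_lin))).
by rewrite !alpha_mul -!S_alpha !alphaiK.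
Qed.

(** * The universal Hom-FODC and its coaction *)

Lemma eps_keval (x : KE) : eps (keval x) = 0.
Proof. by case: x => x /= /eqP. Qed.

Lemma keval_inj : injective (@keval k H A).
Proof. exact: val_inj. Qed.
Lemma keval_lin : lin (@keval k H A).
Proof. by []. Qed.

Lemma keval_bar h : keval (bar h) = h - eps h *: one.
Proof.
by rewrite /Defs.bar insubdK // inE epsB epsZ eps_one mulr1 subrr.
Qed.

Lemma bar_lin : lin bar.
Proof.
move=> a x y; apply: keval_inj.
have -> : keval (a *: bar x + bar y) = a *: keval (bar x) + keval (bar y) by [].
rewrite !keval_bar epsD epsZ scalerDl -scalerA.
by rewrite scalerBr addrACA opprD.
Qed.
Lemma barD x y : bar (x + y) = bar x + bar y.
Proof. exact: (linD bar_lin). Qed.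
Lemma barZ a x : bar (a *: x) = a *: bar x.
Proof. exact: (linZ bar_lin). Qed.

Lemma bar_ker (x : KE) : bar (keval x) = x.
Proof. by apply: keval_inj => /=; rewrite keval_bar eps_keval scale0r subr0. Qed.
Lemma bar_eps0 h : eps h = 0 -> keval (bar h) = h.
Proof. by move=> e; rewrite keval_bar e scale0r subr0. Qed.
Lemma bar_one : bar one = 0.
Proof. by apply: keval_inj => /=; rewrite keval_bar eps_one scale1r subrr. Qed.

Lemma omU_bilin : bilin omU.
Proof.
apply: bilinP => *; rewrite /Defs.omU ?tpureDl ?tpureZl //.
  by rewrite barD tpureDr.
by rewrite barZ tpureZr.
Qed.
Lemma omU_linl y : lin (fun x => omU x y).
Proof. exact: omU_bilin.1 y. Qed.
Lemma omU_linr x : lin (omU x).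
Proof. exact: omU_bilin.2 x. Qed.
Lemma omUDl x y h : omU (x + y) h = omU x h + omU y h.
Proof. exact: (blD omU_bilin). Qed.
Lemma omUZl a x h : omU (a *: x) h = a *: omU x h.
Proof. exact: (blZ omU_bilin). Qed.
Lemma omUDr g x y : omU g (x + y) = omU g x + omU g y.
Proof. exact: (linD (omU_bilin.2 g)). Qed.
Lemma omUZr g a x : omU g (a *: x) = a *: omU g x.
Proof. exact: (linZ (omU_bilin.2 g)). Qed.
Lemma omUNr g x : omU g (- x) = - omU g x.
Proof. exact: (linN (omU_bilin.2 g)). Qed.
Lemma omUBr g x y : omU g (x - y) = omU g x - omU g y.
Proof. by rewrite omUDr omUNr. Qed.
Lemma omU_one g : omU g one = 0.
Proof. by rewrite /Defs.omU bar_one (lin0 ((tpure_bilin _ _).2 g)). Qed.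
Lemma omU_ker g (x : KE) : omU g (keval x) = tpure g x.
Proof. by rewrite /Defs.omU bar_ker. Qed.
Lemma omU_bar g h : omU g (keval (bar h)) = omU g h.
Proof. by rewrite omU_ker. Qed.

Lemma Omega1_lin_ext (W : lmodType k) (F G : Om -> W) : lin F -> lin G ->
  (forall g h, eps h = 0 -> F (omU g h) = G (omU g h)) -> forall w, F w = G w.
Proof.
move=> hF hG h; apply: tensor_lin_ext => // u v.
by rewrite -!omU_ker; apply: h; apply: eps_keval.
Qed.

Lemma Omega1_sum (w : Om) : w = \sum_(p <- repr w) omU p.1 (keval p.2).
Proof. by rewrite {1}(tensor_sum w); apply: eq_bigr => p _; rewrite omU_ker. Qed.

Lemma lactU_fun_bilin c : bilin (fun g (x : KE) => omU (mul (alphai c) g) (alpha (keval x))).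
Proof.
apply: bilinP => *; rewrite ?hmulDr ?hmulZr ?omUDl ?omUZl //=.
  by rewrite alphaD omUDr.
by rewrite alphaZ omUZr.
Qed.
Lemma lactU_omU c g h : lactU c (omU g h) = omU (mul (alphai c) g) (alpha h).
Proof.
rewrite {1}/Defs.omU /lactU tlift_pure; last exact: lactU_fun_bilin.
by rewrite keval_bar alphaD (linN alpha_lin) omUDr alphaZ alpha_one omUNr omUZr omU_one scaler0 subr0.
Qed.

Lemma omU_comp_bilin (L1 L2 : H -> H) : lin L1 -> lin L2 -> bilin (fun a b => omU (L1 a) (L2 b)).
Proof.
move=> h1 h2; apply: bilinP => *.
- by rewrite (linD h1) omUDl.
- by rewrite (linZ h1) omUZl.
- by rewrite (linD h2) omUDr.
- by rewrite (linZ h2) omUZr.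
Qed.

Lemma omU_mul_bilin g h : bilin (fun a b => omU (mul g a) (mul h b)).
Proof. exact: omU_comp_bilin (mull_lin g) (mull_lin h). Qed.

Lemma lactU_lin c : lin (lactU c).
Proof. exact: tlift_lin (lactU_fun_bilin c). Qed.

Lemma lactU_linc w : lin (fun c => lactU c w).
Proof.
move=> a c c'; rewrite /lactU /tlift /tsum scaler_sumr -big_split /=; apply: eq_bigr => p _.
by rewrite alphaiD alphaiZ hmulDl hmulZl omUDl omUZl.
Qed.

Lemma ractU_fun_bilin f :
  bilin (fun g (x : KE) => sw f (fun a b => omU (mul g a) (mul (keval x) b))).
Proof.
apply: bilinP => *.
- by apply: eq_swD => *; rewrite hmulDl omUDl.
- by apply: eq_swZ => *; rewrite hmulZl omUZl.
- by apply: eq_swD => *; rewrite /= hmulDl omUDr.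
- by apply: eq_swZ => *; rewrite /= hmulZl omUZr.
Qed.
Lemma ractU_lin f : lin (fun w => ractU w f).
Proof. exact: tlift_lin (ractU_fun_bilin f). Qed.

Lemma ractU_omU g h f : eps h = 0 ->
  ractU (omU g h) f = sw f (fun a b => omU (mul g a) (mul h b)).
Proof.
move=> e; rewrite {1}/Defs.omU /ractU tlift_pure; last exact: ractU_fun_bilin.
by rewrite bar_eps0.
Qed.

Lemma ractU_linf w : lin (ractU w).
Proof.
have E : forall f, ractU w f =
  tlift (fun g (x : KE) => sw f (fun a b => omU (mul g a) (mul (keval x) b))) w by [].
move=> c f f'; rewrite !E /tlift /tsum scaler_sumr -big_split /=; apply: eq_bigr => p _.
by rewrite (swD (omU_mul_bilin _ _)) (swZ (omU_mul_bilin _ _)).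
Qed.

Lemma betaU_fun_lin : lin (fun x : KE => bar (alpha (keval x))).
Proof.
move=> a x y; have -> : keval (a *: x + y) = a *: keval x + keval y by [].
by rewrite alphaD alphaZ barD barZ.
Qed.
Lemma betaiU_fun_lin : lin (fun x : KE => bar (alphai (keval x))).
Proof.
move=> a x y; have -> : keval (a *: x + y) = a *: keval x + keval y by [].
by rewrite alphaiD alphaiZ barD barZ.
Qed.

Definition betaiU (w : Om) : Om := tmap alphai (fun x : KE => bar (alphai (keval x))) w.

Lemma betaU_lin : lin betaU.
Proof. exact: tmap_lin alpha_lin betaU_fun_lin. Qed.
Lemma betaiU_lin : lin betaiU.
Proof. exact: tmap_lin alphai_lin betaiU_fun_lin. Qed.

Lemma betaU_omU g h : betaU (omU g h) = omU (alpha g) (alpha h).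
Proof.
rewrite /betaU {1}/Defs.omU tmap_pure; [|exact: alpha_lin|exact: betaU_fun_lin].
rewrite -/(omU _ _) keval_bar (linB alpha_lin) alphaZ alpha_one omUBr omUZr.
by rewrite omU_one scaler0 subr0.
Qed.
Lemma betaiU_omU g h : betaiU (omU g h) = omU (alphai g) (alphai h).
Proof.
rewrite /betaiU {1}/Defs.omU tmap_pure; [|exact: alphai_lin|exact: betaiU_fun_lin].
rewrite -/(omU _ _) keval_bar (linB alphai_lin) alphaiZ alphai_one omUBr omUZr.
by rewrite omU_one scaler0 subr0.
Qed.

Lemma dUE h : dU h = sw h omU.
Proof. by []. Qed.

Lemma dU_lin : lin dU.
Proof. move=> c x y; rewrite !dUE (swD omU_bilin) (swZ omU_bilin) //. Qed.

Lemma betaUK w : betaiU (betaU w) = w.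
Proof.
move: w; apply: (Omega1_lin_ext (lin_comp betaiU_lin betaU_lin) (@lin_id _ _)) => g h _.
by rewrite betaU_omU betaiU_omU !alphaK.
Qed.
Lemma betaiUK w : betaU (betaiU w) = w.
Proof.
move: w; apply: (Omega1_lin_ext (lin_comp betaU_lin betaiU_lin) (@lin_id _ _)) => g h _.
by rewrite betaiU_omU betaU_omU !alphaiK.
Qed.

Lemma lactU_mor a m : betaU (lactU a m) = lactU (alpha a) (betaU m).
Proof.
move: m; apply: (Omega1_lin_ext (lin_comp betaU_lin (lactU_lin a)) (lin_comp (lactU_lin _) betaU_lin)) => g h _.
by rewrite lactU_omU !betaU_omU lactU_omU alpha_mul alphaiK alphaK.
Qed.

Lemma eps_mul0 h b : eps h = 0 -> eps (mul h b) = 0.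
Proof. by move=> e; rewrite eps_mul e mul0r. Qed.

Lemma ractU_mor m a : betaU (ractU m a) = ractU (betaU m) (alpha a).
Proof.
move: m; apply: (Omega1_lin_ext (lin_comp betaU_lin (ractU_lin a)) (lin_comp (ractU_lin _) betaU_lin)) => g h e.
rewrite ractU_omU // (lin_sw _ _ betaU_lin) betaU_omU ractU_omU ?eps_alpha //.
rewrite sw_alpha; last exact: omU_mul_bilin.
by apply: sw_ext => p q; rewrite betaU_omU !alpha_mul.
Qed.

Lemma lassocU a b m : lactU (alpha a) (lactU b m) = lactU (mul a b) (betaU m).
Proof.
move: m; apply: (Omega1_lin_ext (lin_comp (lactU_lin _) (lactU_lin b)) (lin_comp (lactU_lin _) betaU_lin)) => g h _.
rewrite !lactU_omU betaU_omU lactU_omU alphaK alphai_mul.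
by rewrite -hmulA alphaiK.
Qed.

Lemma lunitU m : lactU one m = betaU m.
Proof.
move: m; apply: (Omega1_lin_ext (lactU_lin _) betaU_lin) => g h _.
by rewrite lactU_omU betaU_omU alphai_one hmul1l.
Qed.

Lemma rassocU m a b : ractU (ractU m a) (alpha b) = ractU (betaU m) (mul a b).
Proof.
move: m; apply: (Omega1_lin_ext (lin_comp (ractU_lin _) (ractU_lin a)) (lin_comp (ractU_lin _) betaU_lin)) => g h e.
rewrite ractU_omU // (lin_sw _ _ (ractU_lin _)) betaU_omU ractU_omU ?eps_alpha //.
rewrite sw_mul; last exact: omU_mul_bilin.
apply: sw_ext => p q; rewrite ractU_omU; last exact: (eps_mul0 _ e).
rewrite sw_alpha; last exact: omU_mul_bilin.
by apply: sw_ext => r t; rewrite !hmulA.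
Qed.

Lemma runitU m : ractU m one = betaU m.
Proof.
move: m; apply: (Omega1_lin_ext (ractU_lin _) betaU_lin) => g h e.
rewrite ractU_omU // sw_one; last exact: omU_mul_bilin.
by rewrite betaU_omU !hmul1r.
Qed.

Lemma bimodU a m b : lactU (alpha a) (ractU m b) = ractU (lactU a m) (alpha b).
Proof.
move: m; apply: (Omega1_lin_ext (lin_comp (lactU_lin _) (ractU_lin b)) (lin_comp (ractU_lin _) (lactU_lin a))) => g h e.
rewrite ractU_omU // (lin_sw _ _ (lactU_lin _)) lactU_omU ractU_omU ?eps_alpha //.
rewrite sw_alpha; last exact: omU_mul_bilin.
apply: sw_ext => p q; rewrite lactU_omU alphaK alpha_mul.
by rewrite -hmulA alphaiK.
Qed.

Lemma lactU_bilin : bilin lactU.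
Proof. by split=> [w|c]; [apply: lactU_linc | apply: lactU_lin]. Qed.
Lemma ractU_bilin : bilin ractU.
Proof. by split=> [f|w]; [apply: ractU_lin | apply: ractU_linf]. Qed.

Lemma ractU_omU_gen g h f : ractU (omU g h) f =
  sw f (fun a b => omU (mul g a) (mul h b)) - eps h *: sw f (fun a b => omU (mul g a) (alpha b)).
Proof.
rewrite -omU_bar ractU_omU //; last exact: eps_keval.
rewrite keval_bar -sw_scale -sw_sub; apply: sw_ext => a b.
by rewrite hmulBl hmulZl hmul1l omUBr omUZr.
Qed.

Lemma leibnizU h g : dU (mul h g) = lactU h (dU g) + ractU (dU h) g.
Proof.
rewrite !dUE (sw_mul omU_bilin) (lin_sw _ _ (lactU_lin h)) (lin_sw _ _ (ractU_lin g)).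
rewrite (sw_ext h (fun a b => ractU_omU_gen a b g)) sw_sub.
have hL : lin (fun a => sw g (fun c d => omU (mul a c) (alpha d))).
  apply: (@lin_sw_param _ _ g (fun a c d => omU (mul a c) (alpha d))) => c d.
  exact: (lin_comp (omU_linl _) (mulr_lin _)).
rewrite (counitrL _ hL).
have -> : sw g (fun c d => omU (mul (alphai h) c) (alpha d)) = sw g (fun a b => lactU h (omU a b)).
  by apply: sw_ext => a b; rewrite lactU_omU.
by rewrite addrC subrK.
Qed.

Lemma dU_alpha h : dU (alpha h) = betaU (dU h).
Proof.
rewrite !dUE (sw_alpha omU_bilin) (lin_sw _ _ betaU_lin).
by apply: sw_ext => a b; rewrite betaU_omU.
Qed.

Lemma omegaGU h : omegaG A lactU dU h = omU one (alphai h).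
Proof.
rewrite /omegaG; change (sw h (fun a b => lactU (S a) (dU b)) = omU one (alphai h)).
pose F a c d := omU (mul (S a) c) (alpha d).
have hF : trilin F.
  split=> [c d|a d|a c]; rewrite /F.
  - exact: (lin_comp (omU_linl _) (lin_comp (mulr_lin _) S_lin)).
  - exact: (lin_comp (omU_linl _) (mull_lin _)).
  - exact: (lin_comp (omU_linr _) alpha_lin).
have E : forall a b, lactU (S a) (dU b) = sw b (fun c d => F (alphai a) c d).
  move=> a b; rewrite dUE (lin_sw _ _ (lactU_lin _)); apply: sw_ext => c d.
  by rewrite lactU_omU /F S_alphai.
rewrite (sw_ext h E) (coassoc h hF) /F.
rewrite -(counitlL _ (omU_linr one)); apply: sw_ext => a b.
rewrite alphaiK -(lin_sw _ _ (omU_linl b)) antipode_l.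
by rewrite omUZl.
Qed.

Lemma omU_lact g h : omU g h = lactU g (omU one (alphai h)).
Proof. by rewrite lactU_omU hmul1r !alphaiK. Qed.

Lemma Omega1_span_lact_d w : inspan (fun x => exists a b, x = lactU a (dU b)) w.
Proof.
rewrite (Omega1_sum w); apply: inspan_sum => p.
rewrite omU_lact -omegaGU /omegaG -/(sw (keval p.2) _).
rewrite (lin_sw _ _ (lactU_lin _)); apply: sw_inspan => a b.
apply: inspan_gen; exists (mul (alphai p.1) (S a)), (alpha b).
by rewrite -{1}(alphaiK p.1) lassocU dU_alpha.
Qed.

Lemma lactU_dU_ract a b : lactU a (dU b) = ractU (lactU (alphai a) (dU (alphai b))) one.
Proof. by rewrite runitU lactU_mor alphaiK -dU_alpha alphaiK. Qed.

Lemma Omega1_span w : inspan (fun x => exists h g f, x = ractU (lactU h (dU g)) f) w.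
Proof.
apply: inspan_mono (Omega1_span_lact_d w) => y [a [b ->]]; apply: inspan_gen.
by exists (alphai a), (alphai b), one; rewrite lactU_dU_ract.
Qed.

Definition phiU (w : Om) : tensor H Om :=
  tlift (fun g (x : KE) => sw g (fun a b => tpure (alpha a) (omU b (alphai (keval x))))) w.

Lemma tpure_omU_bilin (L : H -> H) y : lin L ->
  bilin (fun a b => tpure (L a) (omU b y) : tensor H Om).
Proof.
move=> hL; apply: (bilin_comp (tpure_bilin _ _)) => //; exact: omU_linl.
Qed.

Lemma phiU_fun_bilin :
  bilin (fun g (x : KE) => sw g (fun a b => tpure (alpha a) (omU b (alphai (keval x))) : tensor H Om)).
Proof.
split=> [x|g].
  apply: sw_lin; apply: tpure_omU_bilin; exact: alpha_lin.
apply: (@lin_sw_param _ _ g (fun (x : KE) a b => tpure (alpha a) (omU b (alphai (keval x))) : tensor H Om)) => a b.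
move=> c x y; have -> : keval (c *: x + y) = c *: keval x + keval y by [].
by rewrite alphaiD alphaiZ omUDr omUZr tpureDr tpureZr.
Qed.

Lemma phiU_lin : lin phiU.
Proof. exact: tlift_lin phiU_fun_bilin. Qed.

Lemma phiU_omU g h : phiU (omU g h) = sw g (fun a b => tpure (alpha a) (omU b (alphai h))).
Proof.
rewrite {1}/Defs.omU /phiU tlift_pure; last exact: phiU_fun_bilin.
apply: sw_ext => a b; congr tpure.
by rewrite keval_bar (linB alphai_lin) alphaiZ alphai_one omUBr omUZr omU_one scaler0 subr0.
Qed.

Lemma phiU_coassoc m : tmap alphai phiU (phiU m) = tassoc (tmap Delta betaiU (phiU m)).
Proof.
move: m; apply: Omega1_lin_ext.
- exact: (lin_comp (tmap_lin alphai_lin phiU_lin) phiU_lin).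
- exact: (lin_comp (@tassoc_lin _ _ _ _) (lin_comp (tmap_lin (hh_Delta_lin hA) betaiU_lin) phiU_lin)).
move=> g h _; apply: tensor_ext => W F hF.
have hF1 : bilin (fun a t => F (alphai a) (phiU t)) := bilin_comp hF alphai_lin phiU_lin.
rewrite tlift_tmap // phiU_omU /sw tlift_tlift //.
have hG := bilin_tlift_tassoc hF.
have hG' : bilin (fun a w => tlift (fun u v => F u (tpure v (betaiU w))) (Delta a)).
  exact: (bilin_comp hG (hh_Delta_lin hA) betaiU_lin).
rewrite tlift_tassoc // tlift_tmap // tlift_tlift //.
rewrite -!/(sw _ _).
pose T x y z := F (alpha x) (tpure (alpha y) (omU z (alphai (alphai h)))).
have hT : trilin T.
  split=> [y z|x z|x y]; rewrite /T.
  - exact: (lin_comp (hF.1 _) alpha_lin).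
  - exact: (lin_comp (hF.2 _) (lin_comp ((tpure_bilin _ _).1 _) alpha_lin)).
  - exact: (lin_comp (hF.2 _) (lin_comp ((tpure_bilin _ _).2 _) (omU_linl _))).
transitivity (sw g (fun a b => sw b (fun c d => T (alphai a) c d))).
  apply: sw_ext => a b; rewrite tlift_pure //.
  rewrite alphaK phiU_omU (lin_sw _ _ (hF.2 _)); apply: sw_ext => c d.
  by rewrite /T alphaiK.
rewrite (coassoc g hT); apply: sw_ext => a b.
rewrite tlift_pure //.
rewrite betaiU_omU /sw (hh_Delta_alpha hA) tlift_tmap //.
all: try (apply: bilin_comp => //; exact: (tpure_bilin _ _).1).
Qed.

Lemma eps_scale_bilin (V : lmodType k) : bilin (fun (a : H) (x : V) => eps a *: x).
Proof.
apply: bilinP => *; rewrite ?epsD ?epsZ ?scalerDl ?scalerA //.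
  by rewrite scalerDr.
by rewrite mulrC.
Qed.

Lemma phiU_counit m : tlift (fun a x => eps a *: x) (phiU m) = betaiU m.
Proof.
move: m; apply: Omega1_lin_ext.
- exact: (lin_comp (tlift_lin (eps_scale_bilin _)) phiU_lin).
- exact: betaiU_lin.
move=> g h _; rewrite phiU_omU /sw tlift_tlift; last exact: eps_scale_bilin.
rewrite -/(sw _ _) betaiU_omU -(counitlL _ (omU_linl _)).
apply: sw_ext => a b; rewrite tlift_pure; last exact: eps_scale_bilin.
by rewrite eps_alpha.
Qed.

Lemma phiU_mor m : phiU (betaU m) = tmap alpha betaU (phiU m).
Proof.
move: m; apply: Omega1_lin_ext.
- exact: (lin_comp phiU_lin betaU_lin).
- exact: (lin_comp (tmap_lin alpha_lin betaU_lin) phiU_lin).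
move=> g h _; rewrite betaU_omU !phiU_omU sw_alpha; last first.
  by apply: tpure_omU_bilin; exact: alpha_lin.
rewrite (lin_sw _ _ (tmap_lin alpha_lin betaU_lin)); apply: sw_ext => a b.
rewrite tmap_pure; [by rewrite betaU_omU alphaiK alphaK | exact: alpha_lin | exact: betaU_lin].
Qed.

Lemma phiU_d h : phiU (dU h) = tmap id dU (Delta h).
Proof.
apply: tensor_ext => W F hF.
rewrite tlift_tmap // -/(sw _ _) dUE (lin_sw _ _ phiU_lin) (lin_sw _ _ (tlift_lin hF)).
pose T x y z := F (alpha x) (omU y z).
have hT : trilin T.
  split=> [y z|x z|x y]; rewrite /T.
  - exact: (lin_comp (hF.1 _) alpha_lin).
  - exact: (lin_comp (hF.2 _) (omU_linl _)).
  - exact: (lin_comp (hF.2 _) (omU_linr _)).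
transitivity (sw h (fun a b => sw a (fun c d => T c d (alphai b)))).
  apply: sw_ext => a b; rewrite phiU_omU (lin_sw _ _ (tlift_lin hF)).
  by apply: sw_ext => c d; rewrite tlift_pure.
rewrite -(coassoc h hT); apply: sw_ext => a b.
rewrite dUE (lin_sw _ _ (hF.2 _)); apply: sw_ext => c d.
by rewrite /T alphaiK.
Qed.

Section PhiUCovariance.
Variables (W : lmodType k) (F : H -> Om -> W).
Hypothesis hF : bilin F.

Lemma tlift_phiU_lact_ract h c y g : eps y = 0 ->
  tlift F (phiU (lactU (alpha h) (ractU (omU c y) g))) =
  sw h (fun h1 h2 => sw c (fun c1 c2 => sw g (fun p q => sw p (fun p1 p2 =>
    F (alpha (mul h1 (mul c1 p1))) (omU (mul h2 (mul c2 p2)) (mul y q)))))).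
Proof.
move=> ey; rewrite ractU_omU // (lin_sw _ _ (lactU_lin _)) (lin_sw _ _ phiU_lin).
rewrite (lin_sw _ _ (tlift_lin hF)).
transitivity (sw g (fun p q => sw h (fun h1 h2 => sw c (fun c1 c2 => sw p (fun p1 p2 =>
    F (alpha (mul h1 (mul c1 p1))) (omU (mul h2 (mul c2 p2)) (mul y q))))))).
  apply: sw_ext => p q.
  rewrite lactU_omU alphaK phiU_omU alphaK (lin_sw _ _ (tlift_lin hF)).
  rewrite (sw_ext _ (g := fun a b => F (alpha a) (omU b (mul y q)))); last first.
    by move=> a b; rewrite tlift_pure.
  rewrite sw_mul; last exact: bilin_comp hF alpha_lin (omU_linl _).
  apply: sw_ext => h1 h2; rewrite sw_mul //.
  exact: bilin_comp hF (lin_comp alpha_lin (mull_lin _)) (lin_comp (omU_linl _) (mull_lin _)).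
rewrite sw_exchange; apply: sw_ext => h1 h2.
by rewrite sw_exchange.
Qed.

Lemma tlift_tmul2_phiU h c y g : eps y = 0 ->
  tlift F (tmul2 mul lactU (Delta (alpha h)) (tmul2 mul ractU (phiU (omU c y)) (Delta g))) =
  sw h (fun h1 h2 => sw c (fun c1 c2 => sw g (fun e f => sw f (fun f1 f2 =>
    F (mul (alpha h1) (mul (alpha c1) e)) (omU (mul h2 (mul c2 f1)) (mul y (alpha f2))))))).
Proof.
move=> ey; rewrite tlift_tmul2 // -/(sw _ _) sw_alpha; last first.
  by apply: bilin_tlift_param => c' d; exact: (bilin_comp hF (mulr_lin _) (lactU_linc _)).
apply: sw_ext => h1 h2.
rewrite tlift_tmul2; last exact: (bilin_comp hF (mull_lin _) (lactU_lin _)).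
have hG : bilin (fun a b => tlift (fun e f => F (mul (alpha h1) (mul a e))
    (lactU (alpha h2) (ractU b f))) (Delta g)).
  apply: bilin_tlift_param => e' f'.
  exact: bilin_comp hF (lin_comp (mull_lin _) (mulr_lin _)) (lin_comp (lactU_lin _) (ractU_lin _)).
rewrite phiU_omU /sw tlift_tlift // -!/(sw _ _); apply: sw_ext => c1 c2.
rewrite tlift_pure // -/(sw _ _); apply: sw_ext => e' f'.
rewrite ractU_omU; last by rewrite eps_alphai.
rewrite (lin_sw _ _ (lactU_lin _)) (lin_sw _ _ (hF.2 _)); apply: sw_ext => f1 f2.
by rewrite lactU_omU alphaK alpha_mul alphaiK.
Qed.

End PhiUCovariance.

Lemma phiU_cov h w g : phiU (lactU (alpha h) (ractU w g)) =
  tmul2 mul lactU (Delta (alpha h)) (tmul2 mul ractU (phiU w) (Delta g)).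
Proof.
move: w; apply: Omega1_lin_ext.
- exact: (lin_comp phiU_lin (lin_comp (lactU_lin _) (ractU_lin g))).
- exact: (lin_comp (tmul2_linr mul_bilin lactU_bilin _)
           (lin_comp (tmul2_linl mul_bilin ractU_bilin _) phiU_lin)).
move=> c y ey; apply: tensor_ext => W F hF.
rewrite tlift_phiU_lact_ract // tlift_tmul2_phiU //.
apply: sw_ext => h1 h2; apply: sw_ext => c1 c2.
rewrite [RHS](coassoc_alpha g (F := fun x z t =>
  F (mul (alpha h1) (mul (alpha c1) x)) (omU (mul h2 (mul c2 z)) (mul y (alpha t))))); last first.
  split=> [z t|x t|x z].
  - exact: lin_comp (hF.1 _) (lin_comp (mull_lin _) (mull_lin _)).
  - exact: lin_comp (hF.2 _) (lin_comp (omU_linl _) (lin_comp (mull_lin _) (mull_lin _))).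
  - exact: lin_comp (hF.2 _) (lin_comp (omU_linr _) (lin_comp (mull_lin _) alpha_lin)).
apply: sw_ext => e f; apply: sw_ext => e1 e2.
by rewrite alphaiK !alpha_mul.
Qed.

(** * Quotients of the universal Hom-FODC by right Hom-ideals *)

Section QuotientByIdeal.
Variables (R : H -> Prop).
Hypotheses (hR0 : forall r, R r -> eps r = 0) (hR : rightHomIdeal A R).

Definition NUgens (x : Om) : Prop := exists h r, R r /\ x = omU h r.

Lemma NU_iff w : NU A R w <-> inspan NUgens w.
Proof.
split; apply: inspan_mono => y [h [r [hr ->]]]; apply: inspan_gen; exists h, r; split => //.
  by rewrite omegaGU -omU_lact.
by rewrite omegaGU -omU_lact.
Qed.

Lemma R_alpha r : R r -> R (alpha r).
Proof. by case: hR => _ h _ _; apply: h. Qed.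
Lemma R_alphai r : R r -> R (alphai r).
Proof. by case: hR => _ _ h _ /h [x [hx ->]]; rewrite alphaK. Qed.
Lemma R_mul r f : R r -> R (mul r f).
Proof. by case: hR => _ _ _ h /h. Qed.
Lemma R_sub : subspace R.
Proof. by case: hR. Qed.

Lemma NU_omU h r : R r -> NU A R (omU h r).
Proof. by move=> hr; apply/NU_iff; apply: inspan_gen; exists h, r. Qed.

Lemma NU_sub : subspace (NU A R).
Proof. exact: inspan_subspace. Qed.

Lemma NU_ind (P : Om -> Prop) : subspace P -> (forall h r, R r -> P (omU h r)) ->
  forall w, NU A R w -> P w.
Proof.
move=> hP hg w /NU_iff; apply: inspan_ind => // y [h [r [hr ->]]]; exact: hg.
Qed.

Lemma NU_omU1 h : eps h = 0 -> NU A R (omU one h) -> R h.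
Proof.
move=> e0 hN.
pose L w := tlift (fun a (x : KE) => eps a *: qp R_sub (keval x)) w.
have hL : bilin (fun a (x : KE) => eps a *: qp R_sub (keval x)).
  exact: bilin_comp (eps_scale_bilin _) (@lin_id _ _) (lin_comp (qp_lin R_sub) keval_lin).
have : L (omU one h) = 0.
  apply: (NU_ind (P := fun w => L w = 0)) hN; first exact: ker_subspace (tlift_lin hL).
  move=> g r hr; rewrite /L /Defs.omU tlift_pure // bar_eps0 ?(hR0 hr) //.
  by rewrite (qp0 R_sub r).2 // scaler0.
by rewrite /L /Defs.omU tlift_pure // bar_eps0 // eps_one scale1r => /qp0.
Qed.

Lemma NU_lin_closed (L : Om -> Om) : lin L -> (forall h r, R r -> NU A R (L (omU h r))) ->
  forall w, NU A R w -> NU A R (L w).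
Proof.
move=> hL hg; apply: NU_ind => //; split.
- by rewrite (lin0 hL); apply: (subspace0 NU_sub).
- by move=> x y hx hy; rewrite (linD hL); apply: (subspaceD NU_sub).
- by move=> a x hx; rewrite (linZ hL); apply: (subspaceZ NU_sub).
Qed.

Lemma NU_lact h w : NU A R w -> NU A R (lactU h w).
Proof.
move: w; apply: (@NU_lin_closed (lactU h)); first exact: lactU_lin.
by move=> g r hr; rewrite lactU_omU; apply: NU_omU; apply: R_alpha.
Qed.
Lemma NU_ract w f : NU A R w -> NU A R (ractU w f).
Proof.
move: w; apply: (@NU_lin_closed (fun w => ractU w f)); first exact: ractU_lin.
move=> g r hr /=; rewrite ractU_omU; last exact: hR0.
apply/NU_iff; apply: sw_inspan => a b; apply: inspan_gen; exists (mul g a), (mul r b).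
by split => //; apply: R_mul.
Qed.
Lemma NU_beta w : NU A R w -> NU A R (betaU w).
Proof.
move: w; apply: (@NU_lin_closed betaU); first exact: betaU_lin.
by move=> g r hr; rewrite betaU_omU; apply: NU_omU; apply: R_alpha.
Qed.
Lemma NU_betai w : NU A R w -> NU A R (betaiU w).
Proof.
move: w; apply: (@NU_lin_closed betaiU); first exact: betaiU_lin.
by move=> g r hr; rewrite betaiU_omU; apply: NU_omU; apply: R_alphai.
Qed.

Lemma NU_subbimod : homSubbimoduleU A (NU A R).
Proof.
split.
- exact: NU_sub.
- move=> h w; exact: NU_lact.
- move=> w f; exact: NU_ract.
- move=> w; exact: NU_beta.
- by move=> w hw; exists (betaiU w); split; [apply: NU_betai | rewrite betaiUK].
Qed.

Section Quotient.
Variables (Q : lmodType k) (pi : Om -> Q).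
Hypotheses (hpi : lin pi) (hsurj : forall q, exists w, pi w = q)
  (hker : forall w, pi w = 0 <-> NU A R w).

Local Notation facQ := (factor hsurj).

Lemma facQE (F : Om -> Om) : lin F -> (forall w, NU A R w -> NU A R (F w)) ->
  forall w, facQ (fun x => pi (F x)) (pi w) = pi (F w).
Proof. by move=> hF hN; apply: (factorE hpi) => [|x /hker/hN/hker]; first exact: lin_comp hpi hF. Qed.

Lemma facQ_lin (F : Om -> Om) : lin F -> (forall w, NU A R w -> NU A R (F w)) ->
  lin (facQ (fun x => pi (F x))).
Proof. by move=> hF hN; apply: (factor_lin hpi) => [|x /hker/hN/hker]; first exact: lin_comp hpi hF. Qed.

Definition gammaQ := facQ (fun w => pi (betaU w)).
Definition gammaiQ := facQ (fun w => pi (betaiU w)).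
Definition lactQ h := facQ (fun w => pi (lactU h w)).
Definition ractQ q f := facQ (fun w => pi (ractU w f)) q.
Definition dQ h := pi (dU h).

Lemma gammaQE w : gammaQ (pi w) = pi (betaU w).
Proof. apply: (facQE (F := betaU)); [exact: betaU_lin | move=> x; exact: NU_beta]. Qed.
Lemma gammaiQE w : gammaiQ (pi w) = pi (betaiU w).
Proof. apply: (facQE (F := betaiU)); [exact: betaiU_lin | move=> x; exact: NU_betai]. Qed.
Lemma lactQE h w : lactQ h (pi w) = pi (lactU h w).
Proof. apply: (facQE (F := lactU h)); [exact: lactU_lin | move=> x; exact: NU_lact]. Qed.
Lemma ractQE w f : ractQ (pi w) f = pi (ractU w f).
Proof. apply: (facQE (F := fun w => ractU w f)); [exact: ractU_lin | move=> x; exact: NU_ract]. Qed.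

Lemma gammaQ_lin : lin gammaQ.
Proof. apply: (facQ_lin (F := betaU)); [exact: betaU_lin | move=> x; exact: NU_beta]. Qed.
Lemma gammaiQ_lin : lin gammaiQ.
Proof. apply: (facQ_lin (F := betaiU)); [exact: betaiU_lin | move=> x; exact: NU_betai]. Qed.
Lemma lactQ_lin h : lin (lactQ h).
Proof. apply: (facQ_lin (F := lactU h)); [exact: lactU_lin | move=> x; exact: NU_lact]. Qed.
Lemma ractQ_lin f : lin (fun q => ractQ q f).
Proof. apply: (facQ_lin (F := fun w => ractU w f)); [exact: ractU_lin | move=> x; exact: NU_ract]. Qed.

Lemma lactQ_linc q : lin (fun h => lactQ h q).
Proof.
move=> a x y; case: (hsurj q) => {}q <-; rewrite !lactQE -hpi; congr pi; exact: lactU_linc.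
Qed.
Lemma ractQ_linf q : lin (ractQ q).
Proof.
move=> a x y; case: (hsurj q) => {}q <-; rewrite !ractQE -hpi; congr pi; exact: ractU_linf.
Qed.

Lemma quot_homBimodule : isHomBimodule A gammaQ gammaiQ lactQ ractQ.
Proof.
split.
- exact: gammaQ_lin.
- by move=> q; case: (hsurj q) => {}q <-; rewrite gammaQE gammaiQE betaUK.
- by move=> q; case: (hsurj q) => {}q <-; rewrite gammaiQE gammaQE betaiUK.
- by split=> [q|h]; [apply: lactQ_linc | apply: lactQ_lin].
- by split=> [f|q]; [apply: ractQ_lin | apply: ractQ_linf].
- by move=> a m; case: (hsurj m) => {}m <-; rewrite lactQE !gammaQE lactQE lactU_mor.
- by move=> m a; case: (hsurj m) => {}m <-; rewrite ractQE !gammaQE ractQE ractU_mor.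
- by move=> a b m; case: (hsurj m) => {}m <-; rewrite !lactQE gammaQE lactQE lassocU.
- by move=> m; case: (hsurj m) => {}m <-; rewrite lactQE gammaQE lunitU.
- by move=> m a b; case: (hsurj m) => {}m <-; rewrite !ractQE gammaQE ractQE rassocU.
- by move=> m; case: (hsurj m) => {}m <-; rewrite ractQE gammaQE runitU.
- by move=> a m b; case: (hsurj m) => {}m <-; rewrite ractQE lactQE lactQE ractQE bimodU.
Qed.

Lemma quot_homFODC : isHomFODC A gammaQ gammaiQ lactQ ractQ dQ.
Proof.
split.
- exact: quot_homBimodule.
- exact: lin_comp hpi dU_lin.
- by move=> h g; rewrite /dQ leibnizU (linD hpi) lactQE ractQE.
- by move=> h; rewrite /dQ dU_alpha gammaQE.
- move=> q; case: (hsurj q) => {}q <-; apply: (inspan_lin hpi) (Omega1_span q) => x [h [g [f ->]]].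
  by exists h, g, f; rewrite /dQ lactQE ractQE.
Qed.

Definition phiQ := facQ (fun w => tmap id pi (phiU w)).

Lemma tmap_pi_lin : lin (tmap (@id H) pi).
Proof. exact: tmap_lin (@lin_id _ _) hpi. Qed.

Lemma pi_phiU_NU w : NU A R w -> tmap id pi (phiU w) = 0.
Proof.
move: w; apply: NU_ind; first exact: ker_subspace (lin_comp tmap_pi_lin phiU_lin).
move=> g r hr; rewrite phiU_omU (lin_sw _ _ tmap_pi_lin); apply: sw_zero => a b.
rewrite tmap_pure; [|exact: (@lin_id _ _)|exact: hpi].
have -> : pi (omU b (alphai r)) = 0 by apply/hker; apply: NU_omU; apply: R_alphai.
exact: (lin0 ((tpure_bilin _ _).2 _)).
Qed.

Lemma phiQE w : phiQ (pi w) = tmap id pi (phiU w).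
Proof.
apply: (factorE hpi); first exact: lin_comp tmap_pi_lin phiU_lin.
by move=> x /hker /pi_phiU_NU.
Qed.
Lemma phiQ_lin : lin phiQ.
Proof.
apply: (factor_lin hpi); first exact: lin_comp tmap_pi_lin phiU_lin.
by move=> x /hker /pi_phiU_NU.
Qed.

Ltac lin_tac := try exact: (@lin_id _ _); try exact: hpi; try exact: tmap_pi_lin;
  try exact: alphai_lin; try exact: alpha_lin; try exact: phiQ_lin; try exact: gammaQ_lin;
  try exact: gammaiQ_lin; try exact: (hh_Delta_lin hA); try exact: betaU_lin; try exact: betaiU_lin;
  try exact: phiU_lin.

Lemma phiQ_coassoc q : tmap alphai phiQ (phiQ q) = tassoc (tmap Delta gammaiQ (phiQ q)).
Proof.
case: (hsurj q) => {}q <-; rewrite phiQE tmap_tmap //; lin_tac.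
rewrite (tmap_ext (g2 := fun x => tmap id pi (phiU x)) _ (fun a => erefl) phiQE).
have -> : tmap alphai (fun x => tmap id pi (phiU x)) (phiU q) =
    tmap id (tmap id pi) (tmap alphai phiU (phiU q)).
  by rewrite tmap_tmap //; lin_tac.
rewrite phiU_coassoc -tassoc_nat; lin_tac.
congr tassoc; rewrite !tmap_tmap //; lin_tac.
by apply: tmap_ext => // x; rewrite gammaiQE.
Qed.

Lemma quot_homLComodule : isHomLComodule A gammaQ gammaiQ phiQ.
Proof.
split.
- exact: phiQ_lin.
- exact: phiQ_coassoc.
- move=> m; case: (hsurj m) => {}m <-; rewrite phiQE gammaiQE tlift_tmap; last exact: eps_scale_bilin.
  rewrite -phiU_counit (lin_tlift _ _ hpi); apply: tlift_ext => a x.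
  by rewrite (linZ hpi).
- move=> m; case: (hsurj m) => {}m <-; rewrite gammaQE !phiQE phiU_mor.
  rewrite !tmap_tmap //; lin_tac.
  by apply: tmap_ext => // x; rewrite gammaQE.
Qed.

Lemma phiQ_cov h m g : phiQ (lactQ (alpha h) (ractQ m g)) =
  tmul2 mul lactQ (Delta (alpha h)) (tmul2 mul ractQ (phiQ m) (Delta g)).
Proof.
case: (hsurj m) => {}m <-; rewrite ractQE lactQE !phiQE phiU_cov.
have hm := mul_bilin.
rewrite (tmul2_nat_r (g' := lactQ) (p' := pi)) //; last first.
- by move=> b d; rewrite lactQE.
- by move=> d; apply: lactQ_lin.
rewrite (tmul2_nat_l (g' := ractQ) (p' := pi)) //.
- by move=> d; apply: ractQ_lin.
- by move=> b d; rewrite ractQE.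
Qed.

Lemma quot_leftCov : isLeftCovHomFODC A gammaQ gammaiQ lactQ ractQ dQ.
Proof.
split; first exact: quot_homFODC.
exists phiQ; split.
- exact: quot_homLComodule.
- exact: phiQ_cov.
- by move=> h; rewrite /dQ phiQE phiU_d tmap_tmap //; lin_tac.
Qed.

Lemma omegaQ h : omegaG A lactQ dQ h = pi (omU one (alphai h)).
Proof.
rewrite -omegaGU /omegaG (lin_tlift _ _ hpi); apply: tlift_ext => a b.
by rewrite /dQ lactQE.
Qed.

Lemma RGamma_quot h : RGamma A lactQ dQ h <-> R h.
Proof.
rewrite /RGamma omegaQ; split=> [[e0 /hker] | hr].
  by move/NU_omU1; rewrite eps_alphai => /(_ e0) /R_alpha; rewrite alphaiK.
by split; [exact: hR0 | apply/hker/NU_omU/R_alphai].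
Qed.

End Quotient.

Lemma NU_quotient_leftCov (Q : lmodType k) (pi : Om -> Q) :
  lin pi -> (forall q, exists w, pi w = q) -> (forall w, pi w = 0 <-> NU A R w) ->
  exists (gamma gammai : Q -> Q) (lactQ : H -> Q -> Q) (ractQ : Q -> H -> Q),
    [/\ (forall w, gamma (pi w) = pi (betaU w)),
        (forall h w, lactQ h (pi w) = pi (lactU h w)),
        (forall w h, ractQ (pi w) h = pi (ractU w h)),
        isLeftCovHomFODC A gamma gammai lactQ ractQ (fun h => pi (dU h)) &
        (forall h, RGamma A lactQ (fun h => pi (dU h)) h <-> R h)].
Proof.
move=> hpi hsurj hker.
exists (gammaQ hsurj), (gammaiQ hsurj), (lactQ hsurj), (ractQ hsurj); split.
- exact: gammaQE.
- exact: lactQE.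
- exact: ractQE.
- exact: quot_leftCov.
- exact: RGamma_quot.
Qed.

End QuotientByIdeal.
(** * Left-covariant Hom-FODCs as quotients of the universal one *)

Section LeftCovariant.
Variables (G : lmodType k) (gamma gammai : G -> G) (lact : H -> G -> G)
  (ract : G -> H -> G) (d : H -> G).
Hypothesis hLC : isLeftCovHomFODC A gamma gammai lact ract d.

Let hF : isHomFODC A gamma gammai lact ract d := hLC.1.
Let hB : isHomBimodule A gamma gammai lact ract := fo_bimodule hF.

Lemma gamma_lin : lin gamma. Proof. exact: hb_mu_lin hB. Qed.
Lemma gammaK m : gammai (gamma m) = m. Proof. exact: (hb_muK hB m). Qed.
Lemma gammaiK m : gamma (gammai m) = m. Proof. exact: (hb_muiK hB m). Qed.
Lemma lact_bilin : bilin lact. Proof. exact: hb_lact_bilin hB. Qed.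
Lemma ract_bilin : bilin ract. Proof. exact: hb_ract_bilin hB. Qed.
Lemma lact_linr c : lin (lact c). Proof. exact: lact_bilin.2 c. Qed.
Lemma lact_linl m : lin (fun c => lact c m). Proof. exact: lact_bilin.1 m. Qed.
Lemma ract_linl f : lin (fun m => ract m f). Proof. exact: ract_bilin.1 f. Qed.
Lemma ract_linr m : lin (ract m). Proof. exact: ract_bilin.2 m. Qed.
Lemma lact_morG a m : gamma (lact a m) = lact (alpha a) (gamma m). Proof. exact: (hb_lact_mor hB a m). Qed.
Lemma lassocG a b m : lact (alpha a) (lact b m) = lact (mul a b) (gamma m). Proof. exact: (hb_lassoc hB a b m). Qed.
Lemma lunitG m : lact one m = gamma m. Proof. exact: (hb_lunit hB m). Qed.
Lemma runitG m : ract m one = gamma m. Proof. exact: (hb_runit hB m). Qed.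
Lemma bimodG a m b : lact (alpha a) (ract m b) = ract (lact a m) (alpha b). Proof. exact: (hb_bimod hB a m b). Qed.
Lemma d_lin : lin d. Proof. exact: fo_d_lin hF. Qed.
Lemma leibnizG h g : d (mul h g) = lact h (d g) + ract (d h) g. Proof. exact: (fo_leibniz hF h g). Qed.
Lemma d_alpha h : d (alpha h) = gamma (d h). Proof. exact: (fo_d_alpha hF h). Qed.
Lemma gamma_inj : injective gamma. Proof. exact: can_inj gammaK. Qed.
Lemma d_alphai h : d (alphai h) = gammai (d h).
Proof. by apply: gamma_inj; rewrite gammaiK -d_alpha alphaiK. Qed.

Lemma d_one : d one = 0.
Proof.
have e := leibnizG one one.
rewrite hmul1l d_alpha lunitG runitG in e.
have : gamma (d one) = 0.
  by apply: (addrI (gamma (d one))); rewrite addr0 -e.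
move=> e2; apply: gamma_inj; by rewrite e2 (lin0 gamma_lin).
Qed.

Definition omG h := sw h (fun a b => lact (S a) (d b)).
Lemma omGE h : omegaG A lact d h = omG h. Proof. by []. Qed.

Lemma omG_fun_bilin : bilin (fun a b => lact (S a) (d b)).
Proof. exact: bilin_comp lact_bilin S_lin d_lin. Qed.
Lemma omG_lin : lin omG.
Proof. exact: (sw_lin omG_fun_bilin). Qed.
Lemma omG_alpha h : omG (alpha h) = gamma (omG h).
Proof.
rewrite /omG (sw_alpha omG_fun_bilin) (lin_sw _ _ gamma_lin); apply: sw_ext => a b.
by rewrite lact_morG S_alpha d_alpha.
Qed.
Lemma omG_alphai h : omG (alphai h) = gammai (omG h).
Proof. by apply: gamma_inj; rewrite gammaiK -omG_alpha alphaiK. Qed.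
Lemma omG_one : omG one = 0.
Proof. by rewrite /omG (sw_one omG_fun_bilin) d_one (lin0 (lact_linr _)). Qed.

Definition piG (w : Om) : G := tlift (fun g (x : KE) => lact g (omG (keval x))) w.
Lemma piG_fun_bilin : bilin (fun g (x : KE) => lact g (omG (keval x))).
Proof. exact: bilin_comp lact_bilin (@lin_id _ _) (lin_comp omG_lin keval_lin). Qed.
Lemma piG_lin : lin piG.
Proof. exact: tlift_lin piG_fun_bilin. Qed.
Lemma piG_omU g h : piG (omU g h) = lact g (omG h).
Proof.
rewrite /piG /Defs.omU tlift_pure; last exact: piG_fun_bilin.
rewrite keval_bar (linB omG_lin) (linZ omG_lin) omG_one scaler0 subr0 //.
Qed.

Lemma piG_lact c w : piG (lactU c w) = lact c (piG w).
Proof.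
move: w; apply: Omega1_lin_ext.
- exact: lin_comp piG_lin (lactU_lin _).
- exact: lin_comp (lact_linr _) piG_lin.
move=> g h _; rewrite lactU_omU !piG_omU omG_alpha -lassocG alphaiK //.
Qed.

Lemma piG_beta w : piG (betaU w) = gamma (piG w).
Proof.
move: w; apply: Omega1_lin_ext.
- exact: lin_comp piG_lin betaU_lin.
- exact: lin_comp gamma_lin piG_lin.
move=> g h _; by rewrite betaU_omU !piG_omU omG_alpha lact_morG.
Qed.

Lemma piG_d h : piG (dU h) = d h.
Proof.
rewrite dUE (lin_sw _ _ piG_lin).
transitivity (sw h (fun a b => sw b (fun c e => lact (mul (alphai a) (S c)) (gamma (d e))))).
  apply: sw_ext => a b; rewrite piG_omU /omG (lin_sw _ _ (lact_linr _)).
  by apply: sw_ext => c e; rewrite -lassocG alphaiK.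
pose T x c e := lact (mul x (S c)) (gamma (d e)).
have hT : trilin T.
  split=> [c e|x e|x c]; rewrite /T.
  - exact: lin_comp (lact_linl _) (mulr_lin _).
  - exact: lin_comp (lact_linl _) (lin_comp (mull_lin _) S_lin).
  - exact: lin_comp (lact_linr _) (lin_comp gamma_lin d_lin).
rewrite (coassoc h hT) /T.
transitivity (sw h (fun a b => eps a *: gamma (d b))).
  apply: sw_ext => a b.
  rewrite -(lin_sw _ _ (lact_linl _)) antipode_r (linZ (lact_linl _)) lunitG.
  by rewrite d_alphai gammaiK.
rewrite counitlL; last exact: lin_comp gamma_lin d_lin.
by rewrite -d_alpha alphaiK.
Qed.

Lemma piG_omU1 h : piG (omU one h) = omG (alpha h).
Proof. by rewrite piG_omU lunitG omG_alpha. Qed.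

Lemma piG_omegaU h : piG (omegaG A lactU dU h) = omG h.
Proof. by rewrite omegaGU piG_omU1 alphaiK. Qed.

Lemma piG_ract w f : piG (ractU w f) = ract (piG w) f.
Proof.
apply/eqP; rewrite -subr_eq0; apply/eqP.
have hs := Omega1_span_lact_d w; move: w hs; apply: (@inspan_ind _ _ _ (fun w => piG (ractU w f) - ract (piG w) f = 0)).
  apply: ker_subspace; apply: linB_fun.
    exact: lin_comp piG_lin (ractU_lin _).
  exact: lin_comp (ract_linl _) piG_lin.
move=> y [a [b ->]]; apply/eqP; rewrite subr_eq0; apply/eqP.
have rU : forall h g, ractU (dU h) g = dU (mul h g) - lactU h (dU g).
  by move=> h g; rewrite leibnizU addrAC subrr add0r.
have rG : forall h g, ract (d h) g = d (mul h g) - lact h (d g).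
  by move=> h g; rewrite leibnizG addrAC subrr add0r.
rewrite -{1}(alphaiK f) -bimodU rU piG_lact (linB piG_lin) piG_d piG_lact piG_d -rG.
by rewrite bimodG alphaiK piG_lact piG_d.
Qed.

Lemma piG_surj q : exists w, piG w = q.
Proof.
have := fo_span hF q; apply: (@inspan_ind _ _ _ (fun q => exists w, piG w = q)).
  split.
  - by exists 0; rewrite (lin0 piG_lin).
  - by move=> x y [w1 <-] [w2 <-]; exists (w1 + w2); rewrite (linD piG_lin).
  - by move=> c x [w1 <-]; exists (c *: w1); rewrite (linZ piG_lin).
move=> x [h [g [f ->]]]; exists (ractU (lactU h (dU g)) f).
by rewrite piG_ract piG_lact piG_d.
Qed.

Lemma sw_lactU_S_ractU y f : eps y = 0 ->
  sw f (fun p q => lactU (S (alpha p)) (ractU (omU one y) q)) = omU one (mul (alpha y) (alphai f)).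
Proof.
move=> ey.
pose T x c e := omU (mul (S (alpha x)) (alpha c)) (mul (alpha y) (alpha e)).
have hT : trilin T.
  split=> [c e|x e|x c]; rewrite /T.
  - exact: lin_comp (omU_linl _) (lin_comp (mulr_lin _) (lin_comp S_lin alpha_lin)).
  - exact: lin_comp (omU_linl _) (lin_comp (mull_lin _) alpha_lin).
  - exact: lin_comp (omU_linr _) (lin_comp (mull_lin _) alpha_lin).
transitivity (sw f (fun p q => sw q (fun c e => T (alphai p) c e))).
  apply: sw_ext => p q; rewrite ractU_omU // (lin_sw _ _ (lactU_lin _)).
  apply: sw_ext => c e; rewrite lactU_omU hmul1l alpha_mul /T alphaiK.
  by rewrite -S_alphai alphaK.
rewrite (coassoc f hT) /T.
transitivity (sw f (fun p q => eps p *: (fun z => omU one (mul (alpha y) z)) q)).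
  apply: sw_ext => p q; rewrite alphaiK.
  have hL : lin (fun x => omU (alpha x) (mul (alpha y) q)).
    exact: lin_comp (omU_linl _) alpha_lin.
  transitivity (sw p (fun c e => (fun x => omU (alpha x) (mul (alpha y) q)) (mul (S c) e))).
    by apply: sw_ext => c e; rewrite /= alpha_mul S_alpha.
  rewrite -(lin_sw _ _ hL) antipode_l alphaZ alpha_one.
  by rewrite omUZl.
rewrite counitlL //.
exact: lin_comp (omU_linr _) (mull_lin _).
Qed.

Definition RG := RGamma A lact d.

Lemma RG_eps r : RG r -> eps r = 0.
Proof. by case. Qed.

Lemma gammai0 : gammai 0 = 0.
Proof. by rewrite -{1}(lin0 gamma_lin) gammaK. Qed.

Lemma RG_ideal : rightHomIdeal A RG.
Proof.
split.
- split.
  + by split; [exact: eps0 | rewrite omGE (lin0 omG_lin)].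
  + move=> x y [e1 o1] [e2 o2]; split; first by rewrite epsD e1 e2 addr0.
    by rewrite omGE (linD omG_lin) -!omGE o1 o2 addr0.
  + move=> c x [e1 o1]; split; first by rewrite epsZ e1 mulr0.
    by rewrite omGE (linZ omG_lin) -omGE o1 scaler0.
- move=> x [e1 o1]; split; first by rewrite eps_alpha.
  by rewrite omGE omG_alpha -omGE o1 (lin0 gamma_lin).
- move=> y [e1 o1]; exists (alphai y); split; last by rewrite alphaiK.
  split; first by rewrite eps_alphai.
  by rewrite omGE omG_alphai -omGE o1 gammai0.
- move=> r f [e1 o1]; split; first by rewrite eps_mul e1 mul0r.
  rewrite omGE -piG_omegaU omegaGU alphai_mul.
  rewrite -{1}(alphaiK (alphai r)) -sw_lactU_S_ractU; last by rewrite !eps_alphai.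
  rewrite (lin_sw _ _ piG_lin); apply: sw_zero => p q.
  rewrite piG_lact piG_ract piG_omU1 alphaiK omG_alphai -omGE o1 gammai0.
  by rewrite (lin0 (ract_linl _)) (lin0 (lact_linr _)).
Qed.

Section Coaction.
Variable phi : G -> tensor H G.
Hypotheses (hphil : lin phi)
  (hcov : forall h w g, phi (lact (alpha h) (ract w g)) =
           tmul2 mul lact (Delta (alpha h)) (tmul2 mul ract (phi w) (Delta g)))
  (hphid : forall h, phi (d h) = tmap id d (Delta h)).

Lemma phi_lact_d (W : lmodType k) (F : H -> G -> W) a b : bilin F ->
  tlift F (phi (lact a (d b))) = sw a (fun a1 a2 => sw b (fun b1 b2 => F (mul a1 b1) (lact a2 (d b2)))).
Proof.
move=> hFF.
have -> : lact a (d b) = lact (alpha (alphai a)) (ract (d (alphai b)) one).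
  by rewrite runitG -d_alpha !alphaiK.
rewrite hcov alphaiK tlift_tmul2 // -/(sw a _); apply: sw_ext => a1 a2.
rewrite tlift_tmul2; last exact: bilin_comp hFF (mull_lin _) (lact_linr _).
rewrite hphid tlift_tmap; last first.
  apply: bilin_tlift_param => e f.
  exact: bilin_comp hFF (lin_comp (mull_lin _) (mulr_lin _)) (lin_comp (lact_linr _) (ract_linl _)).
transitivity (sw (alphai b) (fun c' b' => F (mul a1 (alpha c')) (lact a2 (gamma (d b'))))).
  apply: sw_ext => c' b'; rewrite -/(sw one _) sw_one.
    by rewrite hmul1r runitG.
  exact: bilin_comp hFF (lin_comp (mull_lin _) (mull_lin _)) (lin_comp (lact_linr _) (ract_linr _)).
rewrite sw_alphai; last first.
  exact: bilin_comp hFF (lin_comp (mull_lin _) alpha_lin) (lin_comp (lact_linr _) (lin_comp gamma_lin d_lin)).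
by apply: sw_ext => b1 b2; rewrite !alphaiK d_alphai gammaiK.
Qed.

(* Woronowicz's projection [m |-> S(m_(-1)) m_(0)] onto the left-invariant forms. *)
Definition Pinv (m : G) : G := tlift (fun c n => lact (S c) n) (phi m).
Lemma Pinv_fun_bilin : bilin (fun c n => lact (S c) n).
Proof. exact: bilin_comp lact_bilin S_lin (@lin_id _ _). Qed.
Lemma Pinv_lin : lin Pinv.
Proof. exact: lin_comp (tlift_lin Pinv_fun_bilin) hphil. Qed.

Lemma Pinv_lact_d a b : Pinv (lact a (d b)) = eps a *: omG (alpha b).
Proof.
rewrite /Pinv phi_lact_d; last exact: Pinv_fun_bilin.
transitivity (sw b (fun b1 b2 => sw a (fun a1 a2 =>
   (fun x => lact (mul (S b1) (alphai x)) (gamma (d b2))) (mul (S a1) a2)))).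
  rewrite sw_exchange; apply: sw_ext => b1 b2; apply: sw_ext => a1 a2.
  rewrite S_mul -{1}(alphaiK (mul (S b1) (S a1))) lassocG; congr lact.
  rewrite alphai_mul -{1}(alphaiK a2) -hmulA alphaiK.
  by rewrite alphai_mul.
transitivity (sw b (fun b1 b2 => eps a *: lact (alpha (S b1)) (gamma (d b2)))).
  apply: sw_ext => b1 b2.
  have hL : lin (fun x => lact (mul (S b1) (alphai x)) (gamma (d b2))).
    exact: lin_comp (lact_linl _) (lin_comp (mull_lin _) alphai_lin).
  rewrite -(lin_sw a (fun a1 a2 => mul (S a1) a2) hL) antipode_l /=.
  by rewrite alphaiZ alphai_one hmulZr hmul1r (linZ (lact_linl _)).
rewrite sw_scale omG_alpha /omG (lin_sw _ _ gamma_lin); congr (_ *: _).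
by apply: sw_ext => b1 b2; rewrite lact_morG.
Qed.

Lemma Pinv_im m : exists x, Pinv m = omG x.
Proof.
have [w <-] := piG_surj m.
have hs := Omega1_span_lact_d w; move: w hs.
apply: (@inspan_ind _ _ _ (fun w => exists x, Pinv (piG w) = omG x)).
  split.
  - by exists 0; rewrite (lin0 piG_lin) (lin0 Pinv_lin) (lin0 omG_lin).
  - move=> x y [x1 e1] [y1 e2]; exists (x1 + y1).
    by rewrite (linD piG_lin) (linD Pinv_lin) e1 e2 (linD omG_lin).
  - move=> c x [x1 e1]; exists (c *: x1).
    by rewrite (linZ piG_lin) (linZ Pinv_lin) e1 (linZ omG_lin).
move=> y [a [b ->]]; exists (eps a *: alpha b).
by rewrite piG_lact piG_d Pinv_lact_d (linZ omG_lin).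
Qed.

Local Notation NUG := (NU A RG).
Let hNU : subspace NUG := NU_sub RG.
Local Notation V := (quotM hNU).
Local Notation qpN := (qp hNU).

(* [omega_G(x) |-> class of 1 (x) \bar{alpha^-1 x}], well defined because
   [\bar{x - x'}] lies in [R_Gamma] whenever [omega_G x = omega_G x']. *)
Definition omega_lift (y : G) : V :=
  match pselect (exists x, omG x = y) with
  | left e => qpN (omU one (alphai (projT1 (cid e))))
  | right _ => 0
  end.

Lemma omega_lift_omG x : omega_lift (omG x) = qpN (omU one (alphai x)).
Proof.
rewrite /omega_lift; case: pselect => [e|ne]; last by exfalso; apply: ne; exists x.
move: (projT2 (cid e)); set x' := projT1 (cid e) => hx.
apply/qpE; rewrite -omUBr -(linB alphai_lin) -omU_bar.
apply: NU_omU; split; first exact: eps_keval.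
rewrite omGE keval_bar (linB omG_lin) (linZ omG_lin) omG_one scaler0 subr0.
by rewrite omG_alphai (linB omG_lin) hx subrr gammai0.
Qed.

Lemma omega_lift_Pinv_lin : lin (fun m => omega_lift (Pinv m)).
Proof.
move=> c m m'; have [x ex] := Pinv_im m; have [x' ex'] := Pinv_im m'.
rewrite (linD Pinv_lin) (linZ Pinv_lin) ex ex' -(linZ omG_lin) -(linD omG_lin) !omega_lift_omG.
by rewrite (linD alphai_lin) (linZ alphai_lin) omUDr omUZr (qp_lin hNU).
Qed.

Definition lactV (c : H) (v : V) : V := qmap (lactU c) v.
Lemma lactVE c w : lactV c (qpN w) = qpN (lactU c w).
Proof.
apply: qmapE; first exact: lactU_lin.
by move=> x hx; apply: (NU_lact RG_ideal).
Qed.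
Lemma lactV_bilin : bilin lactV.
Proof.
split=> [v|c] a x y.
  rewrite -(qp_repr v) !lactVE -(qp_lin hNU); congr qpN; exact: lactU_linc.
rewrite -(qp_repr x) -(qp_repr y) -(qp_lin hNU) !lactVE -(qp_lin hNU); congr qpN.
exact: lactU_lin.
Qed.

Definition piG_retract (m : G) : V := tlift (fun c n => lactV c (omega_lift (Pinv n))) (phi m).
Lemma piG_retract_fun_bilin : bilin (fun c n => lactV c (omega_lift (Pinv n))).
Proof. exact: bilin_comp lactV_bilin (@lin_id _ _) omega_lift_Pinv_lin. Qed.
Lemma piG_retract_lin : lin piG_retract.
Proof. exact: lin_comp (tlift_lin piG_retract_fun_bilin) hphil. Qed.

Lemma piG_retractK w : piG_retract (piG w) = qpN w.
Proof.
apply/eqP; rewrite -subr_eq0; apply/eqP.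
have hs := Omega1_span_lact_d w; move: w hs.
apply: (@inspan_ind _ _ _ (fun w => piG_retract (piG w) - qpN w = 0)).
  apply: ker_subspace; apply: linB_fun; first exact: lin_comp piG_retract_lin piG_lin.
  exact: qp_lin.
move=> y [a [b ->]]; apply/eqP; rewrite subr_eq0; apply/eqP.
rewrite piG_lact piG_d /piG_retract phi_lact_d; last exact: piG_retract_fun_bilin.
transitivity (sw a (fun a1 a2 => eps a2 *:
   (fun x => sw b (fun b1 b2 => qpN (lactU (mul x b1) (omU one b2)))) a1)).
  apply: sw_ext => a1 a2; rewrite -sw_scale; apply: sw_ext => b1 b2.
  rewrite Pinv_lact_d -(linZ omG_lin) omega_lift_omG (linZ alphai_lin) alphaK omUZr (linZ (qp_lin hNU)).
  by rewrite (linZ (lactV_bilin.2 _)) lactVE.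
rewrite counitrL; last first.
  apply: lin_sw_param => b1 b2.
  exact: lin_comp (qp_lin hNU) (lin_comp (lactU_linc _) (mulr_lin _)).
rewrite dUE (lin_sw _ _ (lactU_lin _)) (lin_sw _ _ (qp_lin hNU)).
apply: sw_ext => b1 b2; congr qpN.
by rewrite !lactU_omU hmul1r alphaiK.
Qed.

Lemma piG_ker w : piG w = 0 -> NUG w.
Proof.
move=> e; apply/(qp0 hNU); rewrite -piG_retractK e; exact: (lin0 piG_retract_lin).
Qed.

End Coaction.

Lemma leftCov_iso_quotient : exists pi : Om -> G,
  [/\ lin pi, (forall q, exists w, pi w = q),
      (forall w, pi w = 0 <-> NU A RG w),
      (forall h w, pi (lactU h w) = lact h (pi w)) &
      [/\ (forall w h, pi (ractU w h) = ract (pi w) h),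
          (forall w, pi (betaU w) = gamma (pi w)) &
          (forall h, pi (dU h) = d h)]].
Proof.
have [phi [hcomod hcov hphid]] := hLC.2.
exists piG; split.
- exact: piG_lin.
- exact: piG_surj.
- move=> w; split; first exact: (piG_ker (hc_rho_lin hcomod) hcov hphid).
  apply: (NU_ind (P := fun w => piG w = 0)); first exact: ker_subspace piG_lin.
  move=> h r [er o]; rewrite piG_omU -omGE o.
  exact: (lin0 (lact_linr _)).
- exact: piG_lact.
split.
- exact: piG_ract.
- exact: piG_beta.
- exact: piG_d.
Qed.

End LeftCovariant.
End HomHopfTheory.

Theorem mainTheorem2 (k : fieldType) (H : lmodType k) (A : HomHopfData H) :
  isHomHopf A -> bijective (hS A) ->
  (* (1) *)
  (forall R : H -> Prop,
     (forall r, R r -> heps A r = 0) ->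
     rightHomIdeal A R ->
     homSubbimoduleU A (NU A R) /\
     (forall (Q : lmodType k) (pi : Omega1 A -> Q),
        lin pi -> (forall q, exists w, pi w = q) ->
        (forall w, pi w = 0 <-> NU A R w) ->
        exists (gamma gammai : Q -> Q) (lactQ : H -> Q -> Q) (ractQ : Q -> H -> Q),
          [/\ (forall w, gamma (pi w) = pi (betaU A w)),
              (forall h w, lactQ h (pi w) = pi (lactU A h w)),
              (forall w h, ractQ (pi w) h = pi (ractU A w h)),
              isLeftCovHomFODC A gamma gammai lactQ ractQ (fun h => pi (dU A h)) &
              (forall h, RGamma A lactQ (fun h => pi (dU A h)) h <-> R h)])) /\
  (* (2) *)
  (forall (G : lmodType k) (gamma gammai : G -> G) (lact : H -> G -> G)
          (ract : G -> H -> G) (d : H -> G),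
     isLeftCovHomFODC A gamma gammai lact ract d ->
     [/\ rightHomIdeal A (RGamma A lact d),
         (forall h, RGamma A lact d h -> heps A h = 0) &
         exists pi : Omega1 A -> G,
           [/\ lin pi, (forall q, exists w, pi w = q),
               (forall w, pi w = 0 <-> NU A (RGamma A lact d) w),
               (forall h w, pi (lactU A h w) = lact h (pi w)) &
               [/\ (forall w h, pi (ractU A w h) = ract (pi w) h),
                   (forall w, pi (betaU A w) = gamma (pi w)) &
                   (forall h, pi (dU A h) = d h)]]]).
Proof.
move=> hA _; split=> [R hR0 hR | G gamma gammai lact ract d hLC].
  by split; [exact: (NU_subbimod hA hR0 hR) | exact: (NU_quotient_leftCov hA hR0 hR)].
by split; [exact: (RG_ideal hA hLC) | exact: RG_eps | exact: (leftCov_iso_quotient hA hLC)].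
Qed.
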